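(* Let $u$ and $v$ be two prime words such that $u<_{lex}v$, and let $\alpha$ be an ordinal such that $u^\alpha v<_{lex}v$. Then the word $u^\alpha v^\beta$ is prime for every ordinal $\beta\ge1$.
   Context: $A$ is a finite alphabet with a linear order $<_A$. Words are sequences of letters indexed by countable ordinals, $x^\alpha$ is the concatenation of $\alpha$ copies of $x$. A suffix of $x$ is $x[\gamma,|x|)$, proper if $0<\gamma<|x|$. Write $x<_{str}x'$ if there are letters $a<_Ab$ and words $y,z,z'$ with $x=yaz$, $x'=ybz'$; $x\le_{lex}x'$ iff $x$ is a prefix of $x'$ or $x<_{str}x'$; $<_{lex}$ is its strict version. A word is primitive if $x=y^\alpha$ implies $\alpha=1$ and $y=x$; $w$ is prime if it is primitive and every proper suffix $z$ satisfies $w\le_{lex}z$. *)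

(* Transfinite words are modelled as labelled countable well-orders;
   equality of words is label-preserving order isomorphism. *)
From mathcomp Require Import all_boot all_order.
Import Order.TTheory.



Unset Printing Implicit Defensive.

(* A raw linear order: carrier, strict order, and an encoding into nat
   (witnessing countability once shown injective). *)
Record lorder := LOrder {
  car : Type;
  ord : car -> car -> Prop;
  enc : car -> nat }.

Definition is_ord (O : lorder) : Prop :=
  (forall p q, enc O p = enc O q -> p = q) /\
  (forall p, ~ ord O p p) /\
  (forall p q r, ord O p q -> ord O q r -> ord O p r) /\
  (forall p q, ord O p q \/ p = q \/ ord O q p) /\
  well_founded (ord O).

Section Words.
Variable d : Order.disp_t.
Variable A : finOrderType d.

Record word := Word { wo : lorder; lab : car wo -> A }.

Definition is_word (x : word) : Prop := is_ord (wo x).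

Definition word_eq (x y : word) : Prop :=
  exists (f : car (wo x) -> car (wo y)) (g : car (wo y) -> car (wo x)),
    (forall p, g (f p) = p) /\ (forall q, f (g q) = q) /\
    (forall p q, ord (wo x) p q <-> ord (wo y) (f p) (f q)) /\
    (forall p, lab y (f p) = lab x p).

Definition letter (a : A) : word :=
  @Word (@LOrder unit (fun _ _ => False) (fun _ => 0%N)) (fun _ => a).

Definition cat_ord (x y : lorder) : car x + car y -> car x + car y -> Prop :=
  fun s t => match s, t with
  | inl p, inl q => ord x p q
  | inr p, inr q => ord y p q
  | inl _, inr _ => True
  | inr _, inl _ => False
  end.

Definition cat_enc (x y : lorder) (s : car x + car y) : nat :=
  match s with inl p => (2 * enc x p)%N | inr q => (2 * enc y q).+1 end.

Definition wcat (x y : word) : word :=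
  @Word (@LOrder (car (wo x) + car (wo y)) (@cat_ord (wo x) (wo y))
                 (@cat_enc (wo x) (wo y)))
        (fun s => match s with inl p => lab x p | inr q => lab y q end).

(* Power x^alpha: concatenation of alpha copies of x; position (i, p) is
   position p of the i-th copy (lexicographic order, copy index major). *)
Definition pow_ord (x a : lorder) : car a * car x -> car a * car x -> Prop :=
  fun s t => ord a s.1 t.1 \/ (s.1 = t.1 /\ ord x s.2 t.2).

Definition wpow (x : word) (alpha : lorder) : word :=
  @Word (@LOrder (car alpha * car (wo x)) (@pow_ord (wo x) alpha)
                 (fun s => (2 ^ enc alpha s.1 * (2 * enc (wo x) s.2).+1)%N))
        (fun s => lab x s.2).

Definition suffix (x : word) (gamma : car (wo x)) : word :=
  let T := {t : car (wo x) | t = gamma \/ ord (wo x) gamma t} in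
  @Word (@LOrder T (fun s t => ord (wo x) (proj1_sig s) (proj1_sig t))
                   (fun s => enc (wo x) (proj1_sig s)))
        (fun s => lab x (proj1_sig s)).

(* gamma is a proper suffix index: 0 < gamma (< |x| holds automatically). *)
Definition proper_pos (x : word) (gamma : car (wo x)) : Prop :=
  exists t, ord (wo x) t gamma.

(* x is a prefix of x': x' = x z for some word z, i.e. x is
   isomorphic to an initial segment of x'. *)
Definition wprefix (x x' : word) : Prop :=
  exists f : car (wo x) -> car (wo x'),
    (forall p q, ord (wo x) p q <-> ord (wo x') (f p) (f q)) /\
    (forall p, lab x' (f p) = lab x p) /\
    (forall p q', ord (wo x') q' (f p) -> exists q, f q = q').

Definition str_lt (x x' : word) : Prop :=
  exists (y : word) (a b : A) (z z' : word),
    (a < b)%O /\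
    word_eq x (wcat y (wcat (letter a) z)) /\
    word_eq x' (wcat y (wcat (letter b) z')).

Definition lex_le (x x' : word) : Prop := wprefix x x' \/ str_lt x x'.
Definition lex_lt (x x' : word) : Prop := lex_le x x' /\ ~ word_eq x x'.

Definition is_one (alpha : lorder) : Prop :=
  exists t : car alpha, forall s, s = t.

Definition primitive (x : word) : Prop :=
  forall (y : word) (alpha : lorder), is_word y -> is_ord alpha ->
    word_eq x (wpow y alpha) -> is_one alpha /\ word_eq y x.

Definition prime_word (w : word) : Prop :=
  primitive w /\
  forall gamma : car (wo w), proper_pos w gamma -> lex_le w (suffix w gamma).

End Words.

Arguments word {d} A.
Arguments Word {d A}.
Arguments wo {d A}.
Arguments lab {d A}.
Arguments is_word {d A}.
Arguments word_eq {d A}.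
Arguments letter {d A}.
Arguments wcat {d A}.
Arguments wpow {d A}.
Arguments suffix {d A}.
Arguments proper_pos {d A}.
Arguments wprefix {d A}.
Arguments str_lt {d A}.
Arguments lex_le {d A}.
Arguments lex_lt {d A}.
Arguments primitive {d A}.
Arguments prime_word {d A}.

(* Let [w = u^alpha v^beta].  Comparing the prime [v] with the long power [u^|v|]
   shows that [v = u^K v'] with [u <_str v'], so that [w] begins with [u^(alpha + K)]
   followed by a word strictly above [u].  For such a word the suffix at the start of any
   copy of [u] reads [u^gamma v' ...] with [gamma <= alpha + K], hence is [w] itself or
   strictly above [w]; a suffix starting inside a copy of [u] is handled by the primality of
   [u]; a suffix starting in [v^beta] is at least [v], and [v] is strictly above
   [u^alpha v], a prefix of [w].  Thus [w] is below all its suffixes, strictly so from the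
   first letter of [v^beta] on, and this excludes [w = y^delta] with [delta > 1]: the suffix
   at a copy of [y] would be a prefix of [w]. *)

From mathcomp Require Import all_boot all_order.
From Stdlib Require Import Classical ClassicalEpsilon ProofIrrelevance Wellfounded.
Import Order.TTheory.
Set Bullet Behavior "Strict Subproofs".

Definition well_order (O : lorder) : Prop :=
  (forall p, ~ ord O p p) /\
  (forall p q r, ord O p q -> ord O q r -> ord O p r) /\
  (forall p q, ord O p q \/ p = q \/ ord O q p) /\ well_founded (ord O).

Definition at_most (O : lorder) (p t : car O) : Prop := t = p \/ ord O t p.
Definition at_least (O : lorder) (p t : car O) : Prop := t = p \/ ord O p t.

Section WellOrders.
Variable O : lorder.
Hypothesis W : well_order O.

Lemma wo_irr p : ~ ord O p p. Proof. destruct W as [H _]; exact (H p). Qed.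

Lemma wo_trans p q r : ord O p q -> ord O q r -> ord O p r.
Proof. destruct W as [_ [H _]]; exact (H p q r). Qed.

Lemma wo_tot p q : ord O p q \/ p = q \/ ord O q p.
Proof. destruct W as [_ [_ [H _]]]; exact (H p q). Qed.

Lemma wo_wf : well_founded (ord O). Proof. destruct W as [_ [_ [_ H]]]; exact H. Qed.

Lemma wo_asym p q : ord O p q -> ~ ord O q p.
Proof. intros H1 H2. exact (wo_irr p (wo_trans p q p H1 H2)). Qed.

Lemma wo_min (P : car O -> Prop) : (exists t, P t) ->
  exists t, P t /\ forall s, P s -> ~ ord O s t.
Proof.
  intros [t Ht]. apply NNPP; intro N.
  assert (K : forall t, ~ P t).
  { intro t0. induction t0 as [t0 IH] using (well_founded_ind wo_wf).
    intro Pt. apply N. exists t0; split; auto. intros s Ps Hs. exact (IH s Hs Ps). }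
  exact (K t Ht).
Qed.

Lemma wo_has_min (o : car O) : exists m, forall q, ~ ord O q m.
Proof.
  destruct (wo_min (fun _ => True) (ex_intro _ o I)) as [m [_ H]].
  exists m; intros q; apply H; auto.
Qed.

Lemma at_least_min m p : (forall q, ~ ord O q m) -> at_least O m p.
Proof. intro Hm. destruct (wo_tot m p) as [H|[H|H]]; [right|left|destruct (Hm p H)]; auto. Qed.

Lemma wo_mono_not_below (f : car O -> car O) :
  (forall p q, ord O p q -> ord O (f p) (f q)) -> forall p, ~ ord O (f p) p.
Proof.
  intros Hf p Hp.
  destruct (wo_min (fun p => ord O (f p) p) (ex_intro (fun p => ord O (f p) p) p Hp)) as [p0 [H0 Hm]].
  exact (Hm (f p0) (Hf _ _ H0) H0).
Qed.

End WellOrders.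

Arguments wo_irr {O} W {p}.
Arguments wo_trans {O} W {p q r}.
Arguments wo_asym {O} W {p q}.
Arguments wo_tot {O} W p q.
Arguments wo_wf {O} W.
Arguments wo_min {O} W P _.
Arguments wo_has_min {O} W o.
Arguments at_least_min {O} W {m} p _.
Arguments wo_mono_not_below {O} W f _ p _.

Lemma is_ord_well_order {O} : is_ord O -> well_order O.
Proof. unfold is_ord, well_order; tauto. Qed.

Ltac irrefl_contra := match goal with H : ord ?O ?a ?a |- _ =>
  exfalso; apply (@wo_irr O ltac:(assumption) a H) end.

Lemma wo_mono_iff (O O' : lorder) (D : car O -> Prop) (f : car O -> car O') :
  well_order O -> well_order O' ->
  (forall p q, D p -> D q -> ord O p q -> ord O' (f p) (f q)) ->
  forall p q, D p -> D q -> (ord O p q <-> ord O' (f p) (f q)).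
Proof.
  intros Wx Wy M p q Dp Dq; split; [apply M; auto|intro H].
  destruct (wo_tot Wx p q) as [H1|[H1|H1]]; auto.
  - subst; irrefl_contra.
  - destruct (wo_asym Wy H (M q p Dq Dp H1)).
Qed.

Lemma sig_val_inj {T : Type} {P : T -> Prop} (s t : {x | P x}) :
  proj1_sig s = proj1_sig t -> s = t.
Proof. destruct s, t; simpl; intro; subst; f_equal; apply proof_irrelevance. Qed.

Definition retract {T : Type} {P : T -> Prop} (t0 : T) (H0 : P t0) (t : T) : {x | P x} :=
  match excluded_middle_informative (P t) with
  | left H => exist P t H | right _ => exist P t0 H0 end.

Lemma retract_val {T P t0 H0} {t : T} : P t -> proj1_sig (@retract T P t0 H0 t) = t.
Proof.
  intro H; unfold retract.
  destruct (excluded_middle_informative (P t)); simpl; auto; contradiction.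
Qed.

Lemma retract_id {T P t0 H0} (z : {x : T | P x}) : @retract T P t0 H0 (proj1_sig z) = z.
Proof. apply sig_val_inj; apply retract_val; exact (proj2_sig z). Qed.

Definition sub_order (O : lorder) (P : car O -> Prop) : lorder :=
  @LOrder {t | P t} (fun s t => ord O (proj1_sig s) (proj1_sig t))
    (fun s => enc O (proj1_sig s)).

Lemma well_order_sub O P : well_order O -> well_order (sub_order O P).
Proof.
  intros W; split; [|split; [|split]]; simpl.
  - intros p; apply (wo_irr W).
  - intros p q r; apply (wo_trans W).
  - intros p q. destruct (wo_tot W (proj1_sig p) (proj1_sig q)) as [H|[H|H]]; auto.
    right; left; apply sig_val_inj; auto.
  - apply (Inverse_Image.wf_inverse_image _ _ (ord O) (@proj1_sig _ _)). apply (wo_wf W).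
Qed.

Lemma is_ord_sub O P : is_ord O -> is_ord (sub_order O P).
Proof.
  intros H. pose proof (well_order_sub O P (is_ord_well_order H)) as [W1 [W2 [W3 W4]]].
  split; [|split; [|split; [|split]]]; auto.
  intros p q E. apply sig_val_inj. destruct H as [H _]. apply H; auto.
Qed.

Definition lorder_cat (a b : lorder) : lorder :=
  @LOrder (car a + car b) (cat_ord a b) (cat_enc a b).

Lemma well_order_lorder_cat a b : well_order a -> well_order b -> well_order (lorder_cat a b).
Proof.
  intros Wa Wb; split; [|split; [|split]]; simpl.
  - intros [p|p]; simpl; [apply (wo_irr Wa)|apply (wo_irr Wb)].
  - intros [p|p] [q|q] [r|r]; simpl; try tauto; [apply (wo_trans Wa)|apply (wo_trans Wb)].
  - intros [p|p] [q|q]; simpl; auto.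
    + destruct (wo_tot Wa p q) as [H|[H|H]]; subst; auto.
    + destruct (wo_tot Wb p q) as [H|[H|H]]; subst; auto.
  - assert (HA : forall p, Acc (cat_ord a b) (inl p)).
    { intro p. induction p as [p IH] using (well_founded_ind (wo_wf Wa)).
      constructor. intros [p'|q'] H; simpl in H; [apply IH; auto|contradiction]. }
    intros [p|q]; auto.
    induction q as [q IH] using (well_founded_ind (wo_wf Wb)).
    constructor. intros [p'|q'] H; simpl in H; [apply HA|apply IH; auto].
Qed.

Definition two_order : lorder :=
  @LOrder bool (fun a b => a = false /\ b = true) (fun b => if b then 1 else 0)%N.

Lemma is_ord_two_order : is_ord two_order.
Proof.
  split; [|split; [|split; [|split]]]; simpl.
  - intros [] []; simpl; auto; discriminate.
  - intros p [H1 H2]; congruence.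
  - intros p q r [H1 H2] [H3 H4]; congruence.
  - intros [] []; auto.
  - assert (Af : Acc (fun a b : bool => a = false /\ b = true) false).
    { constructor. intros y [_ H]; discriminate. }
    intros []; auto. constructor. intros y [H _]; subst; auto.
Qed.

Lemma two_order_not_one : ~ is_one two_order.
Proof. intros [t H]. pose proof (H true). pose proof (H false). congruence. Qed.

Section Comparison.
Context {d : Order.disp_t} {A : finOrderType d}.
Implicit Types x y z : word A.

Definition seg_emb x y (D : car (wo x) -> Prop) (f : car (wo x) -> car (wo y)) : Prop :=
  (forall p q, D p -> D q -> (ord (wo x) p q <-> ord (wo y) (f p) (f q))) /\
  (forall p, D p -> lab y (f p) = lab x p) /\
  (forall p q', D p -> ord (wo y) q' (f p) -> exists p', D p' /\ f p' = q').

Definition is_prefix x y := exists f, seg_emb x y (fun _ => True) f.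

Lemma wprefixE x y : wprefix x y <-> is_prefix x y.
Proof.
  unfold wprefix, is_prefix, seg_emb; split.
  - intros [f [H1 [H2 H3]]]; exists f; split; [|split]; auto.
    intros p q' _ H; destruct (H3 p q' H) as [q Hq]; eauto.
  - intros [f [H1 [H2 H3]]]; exists f; split; [|split]; auto.
    intros p q' H; destruct (H3 p q' I H) as [q [_ Hq]]; eauto.
Qed.

Definition seg_iso x y p q (f : car (wo x) -> car (wo y)) : Prop :=
  (forall s t, ord (wo x) s p -> ord (wo x) t p ->
     (ord (wo x) s t <-> ord (wo y) (f s) (f t))) /\
  (forall s, ord (wo x) s p -> lab y (f s) = lab x s) /\
  (forall s, ord (wo x) s p -> ord (wo y) (f s) q) /\
  (forall t, ord (wo y) t q -> exists s, ord (wo x) s p /\ f s = t).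

(* The positional form of [str_lt] (see [str_ltE]): [x] and [y] agree before the positions
   [p] and [q], where [x] has the smaller letter. *)
Definition str_less x y := exists p q f, seg_iso x y p q f /\ (lab x p < lab y q)%O.

Definition lex_leq x y := is_prefix x y \/ str_less x y.

Lemma seg_iso_emb {x y p q f} : well_order (wo y) -> seg_iso x y p q f ->
  seg_emb x y (fun s => ord (wo x) s p) f.
Proof.
  intros Wy [H1 [H2 [H3 H4]]]; split; [|split]; auto.
  intros s q' Hs Hq. apply H4. eapply wo_trans; eauto.
Qed.

Lemma seg_emb_inj {x y D f} : well_order (wo x) -> well_order (wo y) -> seg_emb x y D f ->
  forall {p q}, D p -> D q -> f p = f q -> p = q.
Proof.
  intros Wx Wy [H1 _] p q Dp Dq E.
  destruct (wo_tot Wx p q) as [H|[H|H]]; auto.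
  - apply (H1 p q Dp Dq) in H; rewrite E in H; irrefl_contra.
  - apply (H1 q p Dq Dp) in H; rewrite E in H; irrefl_contra.
Qed.

Lemma seg_emb_uniq {x y D f g} : well_order (wo x) -> well_order (wo y) ->
  seg_emb x y D f -> seg_emb x y D g -> forall p, D p -> f p = g p.
Proof.
  intros Wx Wy Ef Eg p.
  induction p as [p IH] using (well_founded_ind (wo_wf Wx)). intro Dp.
  destruct Ef as [F1 [F2 F3]]. destruct Eg as [G1 [G2 G3]].
  destruct (wo_tot Wy (f p) (g p)) as [H|[H|H]]; auto.
  - destruct (G3 p (f p) Dp H) as [p' [Dp' E]].
    assert (Hp : ord (wo x) p' p) by (apply (G1 p' p Dp' Dp); rewrite E; auto).
    pose proof (IH p' Hp Dp') as E2. rewrite E in E2.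
    apply (F1 p' p Dp' Dp) in Hp. rewrite E2 in Hp. irrefl_contra.
  - destruct (F3 p (g p) Dp H) as [p' [Dp' E]].
    assert (Hp : ord (wo x) p' p) by (apply (F1 p' p Dp' Dp); rewrite E; auto).
    pose proof (IH p' Hp Dp') as E2. rewrite E in E2.
    apply (G1 p' p Dp' Dp) in Hp. rewrite <- E2 in Hp. irrefl_contra.
Qed.

Lemma seg_emb_restr {x y D D' f} : seg_emb x y D f -> (forall p, D' p -> D p) ->
  (forall p t, D' p -> D t -> ord (wo x) t p -> D' t) -> seg_emb x y D' f.
Proof.
  intros [H1 [H2 H3]] S C; split; [|split].
  - intros; apply H1; auto.
  - intros; apply H2; auto.
  - intros p q' Dp Hq. destruct (H3 p q' (S p Dp) Hq) as [p' [Dp' E]].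
    exists p'; split; auto. apply (C p p' Dp Dp'). apply (H1 p' p Dp' (S p Dp)).
    rewrite E; auto.
Qed.

Lemma seg_emb_comp {x y z D E f g} : seg_emb x y D f -> seg_emb y z E g ->
  (forall p, D p -> E (f p)) -> seg_emb x z D (fun p => g (f p)).
Proof.
  intros [F1 [F2 F3]] [G1 [G2 G3]] DE; split; [|split].
  - intros p q Dp Dq. rewrite (F1 p q Dp Dq). apply G1; auto.
  - intros p Dp. rewrite G2; auto.
  - intros p r Dp Hr. destruct (G3 (f p) r (DE p Dp) Hr) as [q [Eq Hq]].
    assert (H : ord (wo y) q (f p)) by (apply (G1 q (f p) Eq (DE p Dp)); rewrite Hq; auto).
    destruct (F3 p q Dp H) as [p' [Dp' E']]. exists p'; split; auto. rewrite E'; auto.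
Qed.

Lemma seg_iso_sym {x y p q f} : well_order (wo x) -> well_order (wo y) -> seg_iso x y p q f ->
  exists g, seg_iso y x q p g.
Proof.
  intros Wx Wy Ag. pose proof (seg_iso_emb Wy Ag) as Em.
  destruct Ag as [H1 [H2 [H3 H4]]].
  destruct (choice (fun t s => ord (wo y) t q -> ord (wo x) s p /\ f s = t)) as [g Hg].
  { intro t. destruct (classic (ord (wo y) t q)) as [Ht|Ht].
    - destruct (H4 t Ht) as [s [Hs E]]; exists s; auto.
    - exists p; intro; contradiction. }
  exists g; split; [|split; [|split]].
  - intros s t Hs Ht. destruct (Hg s Hs) as [Gs Es]. destruct (Hg t Ht) as [Gt Et].
    rewrite (H1 _ _ Gs Gt) Es Et; tauto.
  - intros s Hs. destruct (Hg s Hs) as [Gs Es]. rewrite <- (H2 _ Gs), Es; auto.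
  - intros s Hs. apply (Hg s Hs).
  - intros s Hs. exists (f s); split; auto.
    destruct (Hg (f s) (H3 s Hs)) as [G E].
    exact (seg_emb_inj Wx Wy Em G Hs E).
Qed.

Definition embeds_upto x y p := exists f, seg_emb x y (at_most (wo x) p) f.

Lemma embeds_upto_restr {x y p f t} : well_order (wo x) ->
  seg_emb x y (at_most (wo x) p) f -> ord (wo x) t p -> seg_emb x y (at_most (wo x) t) f.
Proof.
  intros Wx Ef Ht. apply (seg_emb_restr Ef).
  - intros s [E|Hs]; [subst; right; auto|right; eapply wo_trans; eauto].
  - intros s r [E|Hs] _ Hr; subst; right; auto. eapply wo_trans; eauto.
Qed.

(* Embeddings of the initial segments [x[0, p]] into [y] agree where they overlap
   ([seg_emb_uniq]), so they glue together. *)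
Lemma embeds_upto_glue x y : well_order (wo x) -> well_order (wo y) -> inhabited (car (wo y)) ->
  exists phi, seg_emb x y (embeds_upto x y) phi.
Proof.
  intros Wx Wy [y0].
  pose (R := fun p q => exists f, seg_emb x y (at_most (wo x) p) f /\ f p = q).
  assert (Rfun : forall p q q', R p q -> R p q' -> q = q').
  { intros p q q' [f [Ef E]] [g [Eg E']]; subst.
    apply (seg_emb_uniq Wx Wy Ef Eg); left; auto. }
  destruct (choice (fun p q => embeds_upto x y p -> R p q)) as [phi Hphi].
  { intro p. destruct (classic (embeds_upto x y p)) as [[f Ef]|H].
    - exists (f p); intros _; exists f; auto.
    - exists y0; intro; contradiction. }
  assert (Dlow : forall p t, embeds_upto x y p -> ord (wo x) t p ->
    embeds_upto x y t /\ exists f, seg_emb x y (at_most (wo x) p) f /\ f p = phi p /\ phi t = f t).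
  { intros p t Dp Ht. destruct (Hphi p Dp) as [f [Ef E]].
    pose proof (embeds_upto_restr Wx Ef Ht) as Eft.
    split; [exists f; exact Eft|].
    exists f; split; [exact Ef|split; [exact E|]].
    apply (Rfun t); [apply Hphi; exists f; exact Eft|exists f; split; [exact Eft|reflexivity]]. }
  exists phi; split; [|split].
  - apply wo_mono_iff; auto. intros p q Dp Dq H.
    destruct (Dlow q p Dq H) as [_ [f [[F1 _] [E1 E2]]]]. rewrite -E1 E2.
    apply F1; [right; auto|left; auto|auto].
  - intros p Dp. destruct (Hphi p Dp) as [f [[_ [F2 _]] E]]. rewrite <- E.
    apply F2; left; auto.
  - intros p q' Dp Hq. destruct (Hphi p Dp) as [f [Ef E]].
    pose proof Ef as [_ [_ F3]]. rewrite <- E in Hq.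
    destruct (F3 p q' (or_introl Logic.eq_refl) Hq) as [t [[Et|Ht] E']].
    + subst. irrefl_contra.
    + destruct (Dlow p t Dp Ht) as [Dt [g [Eg [_ G2]]]].
      exists t; split; auto. rewrite G2 -E'. exact (seg_emb_uniq Wx Wy Eg Ef t (or_intror Ht)).
Qed.

Lemma seg_emb_onto_prefix {x y D phi} : well_order (wo x) -> well_order (wo y) ->
  seg_emb x y D phi -> (forall p t, D p -> ord (wo x) t p -> D t) ->
  (forall q, exists p, D p /\ phi p = q) -> is_prefix y x.
Proof.
  intros Wx Wy Emb Ddown Onto.
  destruct (choice _ Onto) as [psi Hpsi].
  pose proof Emb as [M1 [M2 _]].
  exists psi; split; [|split].
  - intros q1 q2 _ _. destruct (Hpsi q1) as [D1 E1]. destruct (Hpsi q2) as [D2 E2].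
    rewrite (M1 _ _ D1 D2) E1 E2; tauto.
  - intros q _. destruct (Hpsi q) as [D1 E1]. rewrite <- (M2 _ D1), E1; auto.
  - intros q s _ Hs. destruct (Hpsi q) as [D1 E1].
    assert (Ds : D s) by (eapply Ddown; eauto).
    exists (phi s); split; auto. destruct (Hpsi (phi s)) as [D2 E2].
    exact (seg_emb_inj Wx Wy Emb D2 Ds E2).
Qed.

Lemma seg_emb_boundary {x y D phi} : well_order (wo x) -> well_order (wo y) ->
  seg_emb x y D phi -> (forall p t, D p -> ord (wo x) t p -> D t) ->
  ~ (forall p, D p) -> ~ (forall q, exists p, D p /\ phi p = q) ->
  exists p0 q0, ~ D p0 /\ seg_iso x y p0 q0 phi.
Proof.
  intros Wx Wy Emb Ddown ND NE.
  apply not_all_ex_not in ND. apply not_all_ex_not in NE.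
  destruct (wo_min Wx _ ND) as [p0 [Np0 Mp0]].
  destruct (wo_min Wy _ NE) as [q0 [Nq0 Mq0]].
  assert (DD : forall t, D t <-> ord (wo x) t p0).
  { intro t; split.
    - intro Dt. destruct (wo_tot Wx t p0) as [H|[H|H]]; auto.
      + subst; contradiction.
      + destruct (Np0 (Ddown t p0 Dt H)).
    - intro H. apply NNPP; intro N. exact (Mp0 t N H). }
  assert (EE : forall q, (exists p, D p /\ phi p = q) <-> ord (wo y) q q0).
  { intro q; split.
    - intros [p [Dp E]]. destruct (wo_tot Wy q q0) as [H|[H|H]]; auto.
      + subst; destruct (Nq0 (ex_intro _ p (conj Dp Logic.eq_refl))).
      + exfalso; apply Nq0. destruct Emb as [_ [_ M3]]. subst.
        destruct (M3 p q0 Dp H) as [p' [Dp' E']]. eauto.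
    - intro H. apply NNPP; intro N. exact (Mq0 q N H). }
  exists p0, q0; split; auto.
  destruct Emb as [M1 [M2 M3]]. split; [|split; [|split]].
  - intros s t Hs Ht; apply M1; apply DD; auto.
  - intros s Hs; apply M2; apply DD; auto.
  - intros s Hs; apply EE; exists s; split; auto; apply DD; auto.
  - intros t Ht. apply EE in Ht. destruct Ht as [s [Ds E]]. exists s; split; auto.
    apply DD; auto.
Qed.

Lemma seg_iso_extend {x y p q f} : well_order (wo x) -> well_order (wo y) ->
  seg_iso x y p q f -> lab x p = lab y q -> embeds_upto x y p.
Proof.
  intros Wx Wy [G1 [G2 [G3 G4]]] El.
  exists (fun t => if excluded_middle_informative (t = p) then q else f t).
  split; [|split].
  - intros s t [Es|Hs] [Et|Ht];
    destruct (excluded_middle_informative (s = p)) as [S|S];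
    destruct (excluded_middle_informative (t = p)) as [T|T]; subst; simpl;
    try contradiction; try irrefl_contra.
    + split; intro H; irrefl_contra.
    + split; intro H; [destruct (wo_asym Wx H Ht)|destruct (wo_asym Wy H (G3 t Ht))].
    + split; intro; auto.
    + apply G1; auto.
  - intros s [Es|Hs]; destruct (excluded_middle_informative (s = p)) as [S|S];
    subst; simpl; try contradiction; try irrefl_contra; try (symmetry; exact El); auto.
  - intros s q' [Es|Hs]; destruct (excluded_middle_informative (s = p)) as [S|S];
    subst; simpl; try contradiction; try irrefl_contra; intro Hq.
    + destruct (G4 q' Hq) as [t [Ht E]]. exists t; split; [right; auto|].
      destruct (excluded_middle_informative (t = p)); simpl; auto. subst; irrefl_contra.
    + destruct (G4 q' (wo_trans Wy Hq (G3 s Hs))) as [t [Ht E]].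
      exists t; split.
      * right; exact Ht.
      * destruct (excluded_middle_informative (t = p)); simpl; auto. subst; irrefl_contra.
Qed.

Lemma word_trichotomy x y : well_order (wo x) -> well_order (wo y) ->
  is_prefix x y \/ is_prefix y x \/ str_less x y \/ str_less y x.
Proof.
  intros Wx Wy.
  destruct (classic (inhabited (car (wo y)))) as [Iy|Ny].
  2:{ right; left. exists (fun q => False_rect _ (Ny (inhabits q))).
      split; [|split]; intro p; destruct (Ny (inhabits p)). }
  destruct (embeds_upto_glue x y Wx Wy Iy) as [phi Emb].
  assert (Ddown : forall p t, embeds_upto x y p -> ord (wo x) t p -> embeds_upto x y t).
  { intros p t [f Ef] Ht. exists f; exact (embeds_upto_restr Wx Ef Ht). }
  destruct (classic (forall p, embeds_upto x y p)) as [AllD|NAllD].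
  { left. exists phi. apply (seg_emb_restr Emb); auto. }
  destruct (classic (forall q, exists p, embeds_upto x y p /\ phi p = q)) as [AllE|NAllE].
  { right; left. exact (seg_emb_onto_prefix Wx Wy Emb Ddown AllE). }
  destruct (seg_emb_boundary Wx Wy Emb Ddown NAllD NAllE) as [p0 [q0 [Np0 Ag]]].
  case: (ltgtP (lab x p0) (lab y q0)) => Hl.
  - right; right; left. exists p0, q0, phi; auto.
  - right; right; right. destruct (seg_iso_sym Wx Wy Ag) as [g Hg].
    exists q0, p0, g; auto.
  - destruct (Np0 (seg_iso_extend Wx Wy Ag Hl)).
Qed.

Lemma seg_iso_restr {x y p q f} : well_order (wo x) -> well_order (wo y) -> seg_iso x y p q f ->
  forall t, ord (wo x) t p -> seg_iso x y t (f t) f.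
Proof.
  intros Wx Wy [H1 [H2 [H3 H4]]] t Ht.
  assert (L : forall s, ord (wo x) s t -> ord (wo x) s p) by (intros; eapply wo_trans; eauto).
  split; [|split; [|split]].
  - intros s r Hs Hr; apply H1; auto.
  - intros s Hs; apply H2; auto.
  - intros s Hs. apply (H1 s t (L s Hs) Ht); auto.
  - intros r Hr. destruct (H4 r (wo_trans Wy Hr (H3 t Ht))) as [s [Hs E]].
    exists s; split; auto. apply (H1 s t Hs Ht). rewrite E; auto.
Qed.

Lemma seg_iso_comp {x y z p q r f g} : seg_iso x y p q f -> seg_iso y z q r g ->
  seg_iso x z p r (fun s => g (f s)).
Proof.
  intros [F1 [F2 [F3 F4]]] [G1 [G2 [G3 G4]]]. split; [|split; [|split]].
  - intros s t Hs Ht. rewrite (F1 s t Hs Ht). apply G1; auto.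
  - intros s Hs. rewrite G2; auto.
  - intros s Hs. apply G3; auto.
  - intros t Ht. destruct (G4 t Ht) as [s' [Hs' E]]. destruct (F4 s' Hs') as [s [Hs E']].
    exists s; split; auto. rewrite E'; auto.
Qed.

Lemma seg_iso_prefixr {x y z p q f F} : seg_iso x y p q f -> seg_emb y z (fun _ => True) F ->
  seg_iso x z p (F q) (fun s => F (f s)).
Proof.
  intros [F1 [F2 [F3 F4]]] [G1 [G2 G3]]. split; [|split; [|split]].
  - intros s t Hs Ht. rewrite (F1 s t Hs Ht). apply G1; auto.
  - intros s Hs. rewrite G2; auto.
  - intros s Hs. apply G1; auto.
  - intros t Ht. destruct (G3 q t I Ht) as [s' [_ E]]. subst t.
    apply G1 in Ht; auto. destruct (F4 s' Ht) as [s [Hs E']].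
    exists s; split; auto. rewrite E'; auto.
Qed.

Lemma seg_iso_prefixl {x x' y p q f F} : well_order (wo x) -> well_order (wo x') -> well_order (wo y) ->
  seg_iso x y p q f -> seg_emb x x' (fun _ => True) F ->
  exists h, seg_iso x' y (F p) q h.
Proof.
  intros Wx Wx' Wy Ag EF. destruct (seg_iso_sym Wx Wy Ag) as [g Hg].
  pose proof (seg_iso_prefixr Hg EF) as H2.
  destruct (seg_iso_sym Wy Wx' H2) as [h Hh]. eauto.
Qed.

Lemma prefix_refl x : is_prefix x x.
Proof.
  exists (fun t => t); split; [|split]; try tauto.
  intros p q' _ H; exists q'; auto.
Qed.

Lemma prefix_trans {x y z} : is_prefix x y -> is_prefix y z -> is_prefix x z.
Proof.
  intros [f Hf] [g Hg]. exists (fun p => g (f p)). apply (seg_emb_comp Hf Hg); auto.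
Qed.

Lemma str_less_prefix {x y x' y'} : well_order (wo x) -> well_order (wo y) ->
  well_order (wo x') -> well_order (wo y') ->
  str_less x y -> is_prefix x x' -> is_prefix y y' -> str_less x' y'.
Proof.
  intros Wx Wy Wx' Wy' [p [q [f [Ag L]]]] [F HF] [G HG].
  pose proof (seg_iso_prefixr Ag HG) as A1.
  destruct (seg_iso_prefixl Wx Wx' Wy' A1 HF) as [h Hh].
  exists (F p), (G q), h; split; auto.
  destruct HF as [_ [F2 _]]. destruct HG as [_ [G2 _]].
  rewrite F2 ?G2; auto.
Qed.

Lemma seg_iso_pos {x y p q f F} : well_order (wo x) -> well_order (wo y) -> seg_iso x y p q f ->
  seg_emb x y (fun _ => True) F -> F p = q.
Proof.
  intros Wx Wy Ag EF.
  pose proof (seg_iso_emb Wy Ag) as E1.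
  assert (E2 : seg_emb x y (fun s => ord (wo x) s p) F).
  { apply (seg_emb_restr EF); auto. intros; eapply wo_trans; eauto. }
  pose proof (seg_emb_uniq Wx Wy E1 E2) as U.
  destruct Ag as [H1 [H2 [H3 H4]]].
  destruct (wo_tot Wy (F p) q) as [H|[H|H]]; auto.
  - destruct (H4 _ H) as [s [Hs E]]. rewrite (U s Hs) in E.
    pose proof (seg_emb_inj Wx Wy EF I I E); subst. irrefl_contra.
  - destruct EF as [F1 [F2 F3]]. destruct (F3 p q I H) as [s [_ E]].
    subst q. apply F1 in H; auto. pose proof (H3 s H) as H'. rewrite (U s H) in H'. irrefl_contra.
Qed.

Lemma str_less_irrefl {x} : well_order (wo x) -> str_less x x -> False.
Proof.
  intros Wx [p [q [f [Ag L]]]].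
  assert (E : (fun t => t) p = q).
  { apply (@seg_iso_pos x x p q f (fun t => t) Wx Wx Ag).
    split; [|split]; try tauto. intros p0 q' _ H; exists q'; auto. }
  simpl in E; subst. by rewrite ltxx in L.
Qed.

Lemma prefix_str_greater_contra {x y} : well_order (wo x) -> well_order (wo y) ->
  is_prefix x y -> str_less y x -> False.
Proof.
  intros Wx Wy P S. apply (str_less_irrefl Wy). apply (str_less_prefix Wy Wx Wy Wy S (prefix_refl y) P).
Qed.

Lemma str_less_trans {x y z} : well_order (wo x) -> well_order (wo y) -> well_order (wo z) ->
  str_less x y -> str_less y z -> str_less x z.
Proof.
  intros Wx Wy Wz [p [q [f [Af Lf]]]] [q' [r [g [Ag Lg]]]].
  destruct (wo_tot Wy q q') as [H|[H|H]].
  - pose proof (seg_iso_restr Wy Wz Ag q H) as Ag'.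
    exists p, (g q), (fun s => g (f s)); split. apply (seg_iso_comp Af Ag').
    destruct Ag as [_ [G2 _]]. rewrite G2; auto.
  - subst. exists p, r, (fun s => g (f s)); split. apply (seg_iso_comp Af Ag).
    eapply lt_trans; eauto.
  - pose proof Af as [F1 [F2 [F3 F4]]]. destruct (F4 q' H) as [s [Hs E]].
    pose proof (seg_iso_restr Wx Wy Af s Hs) as Af'. rewrite E in Af'.
    exists s, r, (fun t => g (f t)); split. apply (seg_iso_comp Af' Ag).
    rewrite <- (F2 s Hs), E; auto.
Qed.

Definition sub_word x (P : car (wo x) -> Prop) : word A :=
  @Word _ A (sub_order (wo x) P) (fun s => lab x (proj1_sig s)).

Lemma well_order_cat x y : well_order (wo x) -> well_order (wo y) -> well_order (wo (wcat x y)).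
Proof. exact (well_order_lorder_cat (wo x) (wo y)). Qed.

Lemma well_order_pow x a : well_order (wo x) -> well_order a -> well_order (wo (wpow x a)).
Proof.
  intros Wx Wa; split; [|split; [|split]]; simpl.
  - intros [i p]; unfold pow_ord; simpl. intros [H|[_ H]]; [apply (wo_irr Wa H)|apply (wo_irr Wx H)].
  - intros [i p] [j q] [k r]; unfold pow_ord; simpl.
    intros [H1|[E1 H1]] [H2|[E2 H2]]; subst; auto.
    + left; eapply wo_trans; eauto.
    + right; split; auto; eapply wo_trans; eauto.
  - intros [i p] [j q]; unfold pow_ord; simpl.
    destruct (wo_tot Wa i j) as [H|[H|H]]; auto. subst.
    destruct (wo_tot Wx p q) as [H|[H|H]]; subst; auto.
  - intros [i p]. revert p.
    induction i as [i IHi] using (well_founded_ind (wo_wf Wa)). intro p.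
    induction p as [p IHp] using (well_founded_ind (wo_wf Wx)).
    constructor. intros [j q] [H|[E H]]; simpl in *; [apply IHi; auto|subst; apply IHp; auto].
Qed.

Lemma well_order_letter (a : A) : well_order (wo (letter a)).
Proof.
  split; [|split; [|split]]; simpl; try tauto.
  - intros [] []; auto.
  - intros p; constructor; intros q H; contradiction.
Qed.

Lemma well_order_suffix x g : well_order (wo x) -> well_order (wo (suffix x g)).
Proof. intro W; exact (well_order_sub (wo x) (at_least (wo x) g) W). Qed.

Lemma well_order_sub_word x P : well_order (wo x) -> well_order (wo (sub_word x P)).
Proof. intro W; exact (well_order_sub (wo x) P W). Qed.

Lemma word_eq_of_iso {x y} (f : car (wo x) -> car (wo y)) : well_order (wo x) -> well_order (wo y) ->
  (forall p q, ord (wo x) p q <-> ord (wo y) (f p) (f q)) ->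
  (forall p, lab y (f p) = lab x p) -> (forall q, exists p, f p = q) -> word_eq x y.
Proof.
  intros Wx Wy H1 H2 H3. destruct (choice _ H3) as [g Hg].
  assert (Em : seg_emb x y (fun _ => True) f).
  { split; [|split]; auto. intros p q' _ _; destruct (H3 q') as [p' E]; eauto. }
  exists f, g; split; [|split; [|split]]; auto.
  intro p. exact (seg_emb_inj Wx Wy Em I I (Hg (f p))).
Qed.

Lemma word_eq_of_onto_prefix {x y} (f : car (wo x) -> car (wo y)) :
  well_order (wo x) -> well_order (wo y) -> seg_emb x y (fun _ => True) f ->
  (forall q, exists p, f p = q) -> word_eq x y.
Proof.
  intros Wx Wy [E1 [E2 _]] Onto.
  apply (word_eq_of_iso f Wx Wy); auto.
Qed.

Lemma word_eq_sym x y : word_eq x y -> word_eq y x.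
Proof.
  intros [f [g [H1 [H2 [H3 H4]]]]]. exists g, f; split; [|split; [|split]]; auto.
  - intros p q. rewrite (H3 (g p) (g q)) !H2; tauto.
  - intros p. rewrite <- (H4 (g p)), H2; auto.
Qed.

Lemma word_eq_trans x y z : word_eq x y -> word_eq y z -> word_eq x z.
Proof.
  intros [f [g [H1 [H2 [H3 H4]]]]] [f' [g' [H1' [H2' [H3' H4']]]]].
  exists (fun p => f' (f p)), (fun q => g (g' q)); split; [|split; [|split]].
  - intro p; rewrite H1'; auto.
  - intro q; rewrite H2; auto.
  - intros p q; rewrite H3 H3'; tauto.
  - intro p; rewrite H4' H4; auto.
Qed.

Lemma word_eq_prefix x y : word_eq x y -> is_prefix x y.
Proof.
  intros [f [g [H1 [H2 [H3 H4]]]]]. exists f; split; [|split]; auto.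
  intros p q' _ _; exists (g q'); auto.
Qed.

Lemma prefix_antisym x y : well_order (wo x) -> well_order (wo y) ->
  is_prefix x y -> is_prefix y x -> word_eq x y.
Proof.
  intros Wx Wy [f Hf] [g Hg].
  pose proof (seg_emb_comp Hf Hg (fun _ _ => I)) as Hgf.
  pose proof (seg_emb_comp Hg Hf (fun _ _ => I)) as Hfg.
  assert (Id : forall z, well_order (wo z) -> seg_emb z z (fun _ => True) (fun t => t)).
  { intros z Wz; split; [|split]; try tauto. intros p q' _ _; exists q'; auto. }
  pose proof (seg_emb_uniq Wx Wx Hgf (Id x Wx)) as U1.
  pose proof (seg_emb_uniq Wy Wy Hfg (Id y Wy)) as U2.
  destruct Hf as [F1 [F2 _]].
  exists f, g; split; [|split; [|split]]; auto.
Qed.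

Lemma str_lt_str_less x y : str_lt x y -> str_less x y.
Proof.
  intros [y0 [a [b [z [z' [Hab [[f1 [g1 [A1 [B1 [C1 D1]]]]] [f2 [g2 [A2 [B2 [C2 D2]]]]]]]]]]]].
  pose (p := g1 (inr (inl tt))). pose (q := g2 (inr (inl tt))).
  assert (K1 : forall s, ord (wo x) s p <-> exists s0, f1 s = inl s0).
  { intro s. rewrite (C1 s p). unfold p; rewrite B1. destruct (f1 s) as [s0|[[]|s0]]; simpl.
    - split; eauto.
    - split; [tauto|intros [s0 E]; discriminate].
    - split; [tauto|intros [s1 E]; discriminate]. }
  assert (K2 : forall t, ord (wo y) t q <-> exists t0, f2 t = inl t0).
  { intro t. rewrite (C2 t q). unfold q; rewrite B2. destruct (f2 t) as [s0|[[]|s0]]; simpl.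
    - split; eauto.
    - split; [tauto|intros [s0 E]; discriminate].
    - split; [tauto|intros [s1 E]; discriminate]. }
  assert (O2 : forall u v, ord (wo y) (g2 u) (g2 v) <-> ord (wo (wcat y0 (wcat (letter b) z'))) u v).
  { intros u v; rewrite C2 !B2; tauto. }
  assert (L2 : forall u, lab y (g2 u) = lab (wcat y0 (wcat (letter b) z')) u).
  { intro u; rewrite <- (D2 (g2 u)), B2; auto. }
  pose (f := fun t => g2 (match f1 t with inl s => inl s | inr _ => inr (inl tt) end)).
  assert (Ef : forall s s0, f1 s = inl s0 -> f s = g2 (inl s0)).
  { intros s s0 E; unfold f; rewrite E; auto. }
  exists p, q, f; split.
  + split; [|split; [|split]].
    * intros s t Hs Ht. apply K1 in Hs as [s0 Es]. apply K1 in Ht as [t0 Et].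
      rewrite (Ef _ _ Es) (Ef _ _ Et) O2 C1 Es Et; simpl; tauto.
    * intros s Hs. apply K1 in Hs as [s0 Es]. rewrite (Ef _ _ Es) L2 -D1 Es; auto.
    * intros s Hs. apply K1 in Hs as [s0 Es]. rewrite (Ef _ _ Es). unfold q. apply O2; simpl; auto.
    * intros t Ht. apply K2 in Ht as [t0 Et]. exists (g1 (inl t0)); split.
      { apply K1. exists t0; auto. }
      rewrite (Ef _ t0); auto. rewrite <- Et, A2; auto.
  + rewrite <- D1. unfold p; rewrite B1. rewrite <- D2. unfold q; rewrite B2. simpl. auto.
Qed.

Lemma word_eq_split y q (y0 : word A) (h : car (wo y0) -> car (wo y)) :
  well_order (wo y0) -> well_order (wo y) ->
  (forall s t, ord (wo y0) s t <-> ord (wo y) (h s) (h t)) -> (forall s, lab y (h s) = lab y0 s) ->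
  (forall s, ord (wo y) (h s) q) -> (forall t, ord (wo y) t q -> exists s, h s = t) ->
  word_eq (wcat y0 (wcat (letter (lab y q)) (sub_word y (fun t => ord (wo y) q t)))) y.
Proof.
  intros W0 Wy H1 H2 H3 H4.
  apply (@word_eq_of_iso _ y
    (fun s : car (wo (wcat y0 (wcat (letter (lab y q)) (sub_word y (fun t => ord (wo y) q t))))) =>
       match s with inl s => h s | inr (inl _) => q | inr (inr t) => proj1_sig t end)).
  - apply well_order_cat; [|apply well_order_cat; [apply well_order_letter|]];
      auto using well_order_sub_word.
  - exact Wy.
  - intros [s|[[]|[s Hs]]] [t|[[]|[t Ht]]]; simpl; try tauto.
    + apply H1.
    + split; auto.
    + split; auto; intros _; exact (wo_trans Wy (H3 s) Ht).
    + split; [tauto|intro H; destruct (wo_asym Wy H (H3 t))].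
    + split; [tauto|intro H; irrefl_contra].
    + split; [tauto|intro H; destruct (wo_asym Wy H (wo_trans Wy (H3 t) Hs))].
    + split; [tauto|intro H; destruct (wo_asym Wy H Hs)].
  - intros [s|[[]|[s Hs]]]; simpl; auto.
  - intro t. destruct (wo_tot Wy t q) as [H|[H|H]].
    + destruct (H4 t H) as [s E]. exists (inl s); auto.
    + exists (inr (inl tt)); auto.
    + exists (inr (inr (exist (fun s => ord (wo y) q s) t H))); auto.
Qed.

Lemma str_less_str_lt x y : well_order (wo x) -> well_order (wo y) -> str_less x y -> str_lt x y.
Proof.
  intros Wx Wy [p [q [f [Ag L]]]]. pose proof Ag as [F1 [F2 [F3 F4]]].
  pose (y0 := sub_word x (fun s => ord (wo x) s p)).
  assert (W0 : well_order (wo y0)) by (apply well_order_sub_word; auto).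
  exists y0, (lab x p), (lab y q), (sub_word x (fun s => ord (wo x) p s)),
    (sub_word y (fun s => ord (wo y) q s)); split; auto.
  split; apply word_eq_sym.
  - apply (word_eq_split x p y0 (@proj1_sig _ _) W0 Wx); try tauto.
    + intros [s Hs]; exact Hs.
    + intros t H. exists (exist _ t H); auto.
  - apply (word_eq_split y q y0 (fun s => f (proj1_sig s)) W0 Wy).
    + intros [s Hs] [t Ht]; exact (F1 s t Hs Ht).
    + intros [s Hs]; exact (F2 s Hs).
    + intros [s Hs]; exact (F3 s Hs).
    + intros t H. destruct (F4 t H) as [s [Hs E]]. exists (exist _ s Hs); auto.
Qed.

Lemma str_ltE x y : well_order (wo x) -> well_order (wo y) -> (str_lt x y <-> str_less x y).
Proof. intros Wx Wy; split; [apply str_lt_str_less|apply str_less_str_lt; auto]. Qed.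

Lemma lex_leqE x y : well_order (wo x) -> well_order (wo y) -> (lex_le x y <-> lex_leq x y).
Proof.
  intros Wx Wy. unfold lex_le, lex_leq. rewrite wprefixE (str_ltE x y Wx Wy). tauto.
Qed.

End Comparison.

Section Powers.
Context {d : Order.disp_t} {A : finOrderType d}.

Definition const_word (O : lorder) (a : A) : word A := @Word _ A O (fun _ => a).

(* The letter [a] only serves to turn [O] into the constant word [a^O], to which
   [word_trichotomy] applies. *)
Lemma final_segment_prefix (O : lorder) (a : A) (th : car O) : well_order O ->
  exists h : car O -> car O,
    (forall k k', at_least O th k -> at_least O th k' -> (ord O k k' <-> ord O (h k) (h k'))) /\
    (forall k j, at_least O th k -> ord O j (h k) -> exists k', at_least O th k' /\ h k' = j).
Proof.
  intros W. pose (F := sub_order O (at_least O th)).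
  pose (ii := @retract _ (at_least O th) th (or_introl Logic.eq_refl)).
  destruct (word_trichotomy (const_word F a) (const_word O a) (well_order_sub O _ W) W)
    as [[f Hf]|[[g Hg]|[S|S]]].
  - exists (fun k => f (ii k)). split.
    + intros k k' Hk Hk'. destruct Hf as [F1 _]. rewrite <- F1; auto. simpl.
      unfold ii; rewrite !retract_val; auto. tauto.
    + intros k j Hk Hj. destruct Hf as [_ [_ F3]]. destruct (F3 _ j I Hj) as [p' [_ E]].
      exists (proj1_sig p'); split; [exact (proj2_sig p')|]. unfold ii; rewrite retract_id; auto.
  - pose proof Hg as [G1 [G2 G3]].
    assert (Gm : forall p q, ord O p q -> ord O (proj1_sig (g p)) (proj1_sig (g q))).
    { intros p q H. apply (G1 p q I I) in H. exact H. }
    pose proof (wo_mono_not_below W (fun k => proj1_sig (g k)) Gm) as Se.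
    assert (Gs : forall k, at_least O th k -> exists k0, g k0 = ii k).
    { intros k Hk. destruct (wo_tot W (proj1_sig (g k)) k) as [H|[H|H]].
      - destruct (Se k H).
      - exists k. apply sig_val_inj. unfold ii; rewrite retract_val; auto.
      - destruct (G3 k (ii k) I) as [k0 [_ E]]; eauto.
        simpl. unfold ii; rewrite retract_val; auto. }
    destruct (choice (fun k k0 => at_least O th k -> g k0 = ii k)) as [h Hh].
    { intro k. destruct (classic (at_least O th k)) as [H|H].
      - destruct (Gs k H) as [k0 E]; eauto.
      - exists k; intro; contradiction. }
    exists h; split.
    + intros k k' Hk Hk'. rewrite (G1 (h k) (h k') I I) (Hh k Hk) (Hh k' Hk'). simpl.
      unfold ii; rewrite !retract_val; auto. tauto.
    + intros k j Hk Hj. exists (proj1_sig (g j)); split; [exact (proj2_sig (g j))|].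
      assert (Wc : well_order (wo (const_word O a))) by exact W.
      assert (Wf : well_order (wo (const_word F a))) by exact (well_order_sub O _ W).
      apply (seg_emb_inj Wc Wf Hg I I). rewrite Hh; [|exact (proj2_sig (g j))].
      unfold ii; apply retract_id.
  - destruct S as [p [q [f [_ L]]]]. simpl in L. by rewrite ltxx in L.
  - destruct S as [p [q [f [_ L]]]]. simpl in L. by rewrite ltxx in L.
Qed.

Lemma final_segment_prefix_cases (O : lorder) (a : A) (th : car O) : well_order O ->
  exists h : car O -> car O,
    (forall k k', at_least O th k -> at_least O th k' -> (ord O k k' <-> ord O (h k) (h k'))) /\
    (forall k j, at_least O th k -> ord O j (h k) -> exists k', at_least O th k' /\ h k' = j) /\
    ((forall j, exists k, at_least O th k /\ h k = j) \/
     exists m, (forall k, at_least O th k -> ord O (h k) m) /\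
               (forall j, ord O j m -> exists k, at_least O th k /\ h k = j)).
Proof.
  intros W. destruct (final_segment_prefix O a th W) as [h [H1 H2]]. exists h; split; auto; split; auto.
  destruct (classic (forall j, exists k, at_least O th k /\ h k = j)) as [S|S]; [left; auto|right].
  apply not_all_ex_not in S. destruct (wo_min W _ S) as [m [Nm Mm]].
  exists m; split.
  - intros k Hk. destruct (wo_tot W (h k) m) as [H|[H|H]]; auto.
    + subst; exfalso; apply Nm; eauto.
    + exfalso; apply Nm. destruct (H2 k m Hk H) as [k' [Hk' E]]; eauto.
  - intros j Hj. apply NNPP; intro N. exact (Mm j N Hj).
Qed.

Definition to_suffix (x : word A) g (t : car (wo x)) : car (wo (suffix x g)) :=
  @retract _ (at_least (wo x) g) g (or_introl Logic.eq_refl) t.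

Lemma to_suffix_val (x : word A) g t : at_least (wo x) g t -> proj1_sig (to_suffix x g t) = t.
Proof. intro H. exact (@retract_val _ (at_least (wo x) g) g _ t H). Qed.

Lemma to_suffix_id (x : word A) g (z : car (wo (suffix x g))) : to_suffix x g (proj1_sig z) = z.
Proof. exact (@retract_id _ (at_least (wo x) g) g _ z). Qed.

Lemma prefix_suffix_map (x x' : word A) gg (E : car (wo x) -> car (wo x')) :
  well_order (wo x) -> well_order (wo x') ->
  (forall p q, ord (wo x) p q <-> ord (wo x') (E p) (E q)) ->
  (forall p, lab x' (E p) = lab x p) ->
  (forall s t', at_least (wo x) gg s -> at_least (wo x') (E gg) t' ->
      ord (wo x') t' (E s) -> exists s', E s' = t') ->
  is_prefix (suffix x gg) (suffix x' (E gg)).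
Proof.
  intros Wx Wx' E1 E2 E3.
  assert (Mem : forall z : car (wo (suffix x gg)), at_least (wo x') (E gg) (E (proj1_sig z))).
  { intro z. destruct (proj2_sig z) as [H|H]; [left; rewrite H; auto|right; apply E1; auto]. }
  exists (fun z => to_suffix x' (E gg) (E (proj1_sig z))); split; [|split].
  - intros z1 z2 _ _. simpl.
    rewrite (to_suffix_val _ _ _ (Mem z1)) (to_suffix_val _ _ _ (Mem z2)). apply E1.
  - intros z _. simpl.
    rewrite (to_suffix_val _ _ _ (Mem z)). auto.
  - intros z z2 _ Hz. simpl in Hz.
    rewrite (to_suffix_val _ _ _ (Mem z)) in Hz.
    destruct (E3 (proj1_sig z) (proj1_sig z2) (proj2_sig z) (proj2_sig z2) Hz) as [s Es].
    assert (Ms : at_least (wo x) gg s).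
    { destruct (proj2_sig z2) as [H|H].
      - left. rewrite <- Es in H. destruct (wo_tot Wx s gg) as [H'|[H'|H']]; auto.
        + apply E1 in H'. rewrite H in H'. irrefl_contra.
        + apply E1 in H'. rewrite H in H'. irrefl_contra.
      - right. rewrite <- Es in H. apply E1; auto. }
    exists (to_suffix x gg s); split; auto. apply sig_val_inj.
    rewrite (to_suffix_val _ _ _ (Mem _)) (to_suffix_val _ _ _ Ms). auto.
Qed.

Lemma seg_emb_suffix (x x' : word A) g (E : car (wo x) -> car (wo x')) :
  well_order (wo x) -> well_order (wo x') -> seg_emb x x' (fun _ => True) E ->
  is_prefix (suffix x g) (suffix x' (E g)).
Proof.
  intros Wx Wx' HE. pose proof HE as [E1 [E2 E3]].
  apply (prefix_suffix_map x x' g E Wx Wx'); auto.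
  intros s t' _ _ Ht. destruct (E3 s t' I Ht) as [s' [_ Es]]; eauto.
Qed.

Lemma prefix_suffix_min (x : word A) m : well_order (wo x) -> (forall t, ~ ord (wo x) t m) ->
  is_prefix x (suffix x m).
Proof.
  intros Wx Hm.
  pose proof (fun t => at_least_min Wx t Hm) as Mem.
  exists (fun t => to_suffix x m t); split; [|split].
  - intros p q _ _. simpl.
    rewrite (to_suffix_val _ _ _ (Mem p)) (to_suffix_val _ _ _ (Mem q)); tauto.
  - intros p _. simpl. rewrite (to_suffix_val _ _ _ (Mem p)); auto.
  - intros p z _ _. exists (proj1_sig z); split; auto. apply to_suffix_id.
Qed.

Lemma prefix_suffix_onto (x : word A) p e : well_order (wo x) ->
  seg_emb x (suffix x p) (fun _ => True) e -> forall z, exists q, e q = z.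
Proof.
  intros Wx [E1 [E2 E3]].
  assert (Mono : forall q q', ord (wo x) q q' -> ord (wo x) (proj1_sig (e q)) (proj1_sig (e q'))).
  { intros q q' H. apply (E1 q q' I I) in H. exact H. }
  pose proof (wo_mono_not_below Wx (fun q => proj1_sig (e q)) Mono) as Se.
  intro z. destruct (wo_tot Wx (proj1_sig (e (proj1_sig z))) (proj1_sig z)) as [H|[H|H]].
  - destruct (Se _ H).
  - exists (proj1_sig z). apply sig_val_inj; auto.
  - destruct (E3 (proj1_sig z) z I H) as [q [_ Eq]]. eauto.
Qed.

Lemma self_prefix_onto (x : word A) E : well_order (wo x) -> seg_emb x x (fun _ => True) E ->
  forall t, exists s, E s = t.
Proof.
  intros Wx [E1 [E2 E3]].
  assert (Mono : forall p q, ord (wo x) p q -> ord (wo x) (E p) (E q)).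
  { intros p q H; apply (E1 p q I I); exact H. }
  pose proof (wo_mono_not_below Wx E Mono) as Se.
  intro t. destruct (wo_tot Wx (E t) t) as [H|[H|H]].
  - destruct (Se _ H).
  - eauto.
  - destruct (E3 t t I H) as [s [_ Es]]; eauto.
Qed.

Lemma pow_iso_inj {W u : word A} {Th psi} : well_order (wo W) -> well_order Th -> well_order (wo u) ->
  (forall x y, ord (wo (wpow u Th)) x y <-> ord (wo W) (psi x) (psi y)) ->
  forall x y, psi x = psi y -> x = y.
Proof.
  intros WW WT Wu C1 x y E.
  destruct (wo_tot (well_order_pow u Th Wu WT) x y) as [H|[H|H]]; auto.
  - apply C1 in H; rewrite E in H; irrefl_contra.
  - apply C1 in H; rewrite E in H; irrefl_contra.
Qed.

Lemma at_least_iso_inj {O th} {h : car O -> car O} : well_order O ->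
  (forall k k', at_least O th k -> at_least O th k' -> (ord O k k' <-> ord O (h k) (h k'))) ->
  forall k k', at_least O th k -> at_least O th k' -> h k = h k' -> k = k'.
Proof.
  intros W H1 k k' G G' E. destruct (wo_tot W k k') as [H|[H|H]]; auto.
  - apply (H1 _ _ G G') in H; rewrite E in H; irrefl_contra.
  - apply (H1 _ _ G' G) in H; rewrite E in H; irrefl_contra.
Qed.

Lemma pow_ord_sub (O : lorder) (P : car O -> Prop) (u : word A) (k k' : car (sub_order O P)) q q' :
  pow_ord (wo u) (sub_order O P) (k, q) (k', q') <->
  pow_ord (wo u) O (proj1_sig k, q) (proj1_sig k', q').
Proof.
  unfold pow_ord; simpl. split; intros [H|[E H]]; auto; right; split; auto.
  - subst; auto.
  - apply sig_val_inj; auto.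
Qed.

Lemma prefix_pow (u : word A) Th m : well_order (wo u) -> well_order Th ->
  (forall k, ~ ord Th k m) -> seg_emb u (wpow u Th) (fun _ => True) (fun q => (m, q)).
Proof.
  intros Wu WT Hm. split; [|split].
  - intros q q' _ _; simpl; unfold pow_ord; simpl.
    split; [right; auto|intros [H|[_ H]]; [irrefl_contra|auto]].
  - intros q _; simpl; auto.
  - intros q [k q'] _ [H|[Ek H]]; simpl in *; [destruct (Hm _ H)|subst].
    exists q'; auto.
Qed.

(* [W = u^Th W[t0, _)], the copies of [u] being located by [psi], and [u <_str W[t0, _)]. *)
Definition power_head (W u : word A) (Th : lorder)
  (psi : car Th * car (wo u) -> car (wo W)) (t0 : car (wo W)) :=
  (forall x y, ord (wo (wpow u Th)) x y <-> ord (wo W) (psi x) (psi y)) /\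
  (forall x, lab W (psi x) = lab u x.2) /\
  (forall x, ord (wo W) (psi x) t0) /\
  (forall t, ord (wo W) t t0 -> exists x, psi x = t) /\
  str_less u (suffix W t0).

Lemma power_head_emb (W u : word A) Th psi t0 : well_order (wo W) ->
  power_head W u Th psi t0 -> seg_emb (wpow u Th) W (fun _ => True) psi.
Proof.
  intros WW [C1 [C2 [C3 [C4 _]]]]. split; [|split].
  - intros s s' _ _; apply C1.
  - intros s _; apply C2.
  - intros s t _ Ht. destruct (C4 t (wo_trans WW Ht (C3 s))) as [s' E]. eauto.
Qed.

Section PowerHeadCopy.
Variables (W u : word A) (Th : lorder) (psi : car Th * car (wo u) -> car (wo W)).
Variables (t0 : car (wo W)) (mu : car (wo u)) (th : car Th).
Hypotheses (WW : well_order (wo W)) (WT : well_order Th) (Wu : well_order (wo u)).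
Hypothesis PH : power_head W u Th psi t0.
Hypothesis Hmu : forall p, ~ ord (wo u) p mu.

Let b := psi (th, mu).
(* Inverse of [psi] on its image, arbitrary elsewhere. *)
Let pinv (t : car (wo W)) := epsilon (inhabits (th, mu)) (fun s => psi s = t).

Lemma power_head_inj s s' : psi s = psi s' -> s = s'.
Proof. destruct PH as [C1 _]. exact (pow_iso_inj WW WT Wu C1 s s'). Qed.

Lemma pinv_psi s : pinv (psi s) = s.
Proof.
  apply power_head_inj.
  exact (epsilon_spec _ (fun s' => psi s' = psi s) (ex_intro _ s Logic.eq_refl)).
Qed.

Lemma at_least_copy k p : at_least (wo W) b (psi (k, p)) <-> at_least Th th k.
Proof.
  destruct PH as [C1 _]. split.
  - intros [E|H].
    + apply power_head_inj in E. inversion E; left; auto.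
    + apply C1 in H. destruct H as [H|[E H]]; simpl in *; [right; auto|left; auto].
  - intros [E|H]; subst.
    + destruct (at_least_min Wu p Hmu) as [E|H]; [left; subst; auto|].
      right; apply C1; right; simpl; auto.
    + right; apply C1; left; auto.
Qed.

Lemma at_least_copy_tail t : ~ ord (wo W) t t0 -> at_least (wo W) b t.
Proof.
  destruct PH as [_ [_ [C3 _]]]. intros Ht. right.
  destruct (wo_tot WW t t0) as [H|[H|H]]; [contradiction|subst; apply C3|].
  exact (wo_trans WW (C3 _) H).
Qed.

Lemma copy_suffix_head (z : car (wo (suffix W b))) : ord (wo W) (proj1_sig z) t0 ->
  exists k p, psi (k, p) = proj1_sig z /\ at_least Th th k.
Proof.
  destruct PH as [_ [_ [_ [C4 _]]]]. intros Hz. destruct (C4 _ Hz) as [[k p] E].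
  exists k, p; split; auto. apply (at_least_copy k p). rewrite E. exact (proj2_sig z).
Qed.

Variable h : car Th -> car Th.
Hypothesis Hh : forall k k', at_least Th th k -> at_least Th th k' ->
  (ord Th k k' <-> ord Th (h k) (h k')).

Let copy_shift (z : car (wo (suffix W b))) : car (wo W) :=
  if excluded_middle_informative (ord (wo W) (proj1_sig z) t0)
  then psi (h (pinv (proj1_sig z)).1, (pinv (proj1_sig z)).2) else proj1_sig z.

Lemma copy_shift_head z k p : psi (k, p) = proj1_sig z -> at_least Th th k ->
  copy_shift z = psi (h k, p).
Proof.
  pose proof PH as [_ [_ [C3 _]]]. intros E G. unfold copy_shift. rewrite <- E, pinv_psi.
  destruct (excluded_middle_informative (ord (wo W) (psi (k, p)) t0)) as [HH|NN]; auto.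
  destruct (NN (C3 _)).
Qed.

Lemma copy_shift_tail z : ~ ord (wo W) (proj1_sig z) t0 -> copy_shift z = proj1_sig z.
Proof.
  intros NN. unfold copy_shift.
  destruct (excluded_middle_informative (ord (wo W) (proj1_sig z) t0)); auto; contradiction.
Qed.

Lemma copy_shift_iff z1 z2 :
  ord (wo W) (proj1_sig z1) (proj1_sig z2) <-> ord (wo W) (copy_shift z1) (copy_shift z2).
Proof.
  pose proof PH as [C1 [_ [C3 _]]].
  destruct (classic (ord (wo W) (proj1_sig z1) t0)) as [L1|L1];
  destruct (classic (ord (wo W) (proj1_sig z2) t0)) as [L2|L2].
  - destruct (copy_suffix_head z1 L1) as [k1 [p1 [E1 G1]]].
    destruct (copy_suffix_head z2 L2) as [k2 [p2 [E2 G2]]].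
    rewrite (copy_shift_head _ _ _ E1 G1) (copy_shift_head _ _ _ E2 G2) -E1 -E2 -!C1.
    simpl. unfold pow_ord; simpl.
    rewrite (Hh k1 k2 G1 G2). split; intros [H|[E H]]; auto; right; split; auto.
    + subst; auto.
    + apply (at_least_iso_inj WT Hh _ _ G1 G2 E).
  - destruct (copy_suffix_head z1 L1) as [k1 [p1 [E1 G1]]].
    rewrite (copy_shift_head _ _ _ E1 G1) (copy_shift_tail _ L2).
    assert (T2 : proj1_sig z2 = t0 \/ ord (wo W) t0 (proj1_sig z2)).
    { destruct (wo_tot WW (proj1_sig z2) t0) as [H|[H|H]]; auto; contradiction. }
    split; intros _; destruct T2 as [E|H'].
    + rewrite E; apply C3.
    + exact (wo_trans WW (C3 _) H').
    + rewrite E; exact L1.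
    + exact (wo_trans WW L1 H').
  - destruct (copy_suffix_head z2 L2) as [k2 [p2 [E2 G2]]].
    rewrite (copy_shift_head _ _ _ E2 G2) (copy_shift_tail _ L1).
    split; intro H; exfalso;
    destruct (wo_tot WW (proj1_sig z1) t0) as [H'|[H'|H']]; try contradiction.
    + rewrite H' in H. exact (wo_asym WW H L2).
    + exact (wo_asym WW H (wo_trans WW L2 H')).
    + rewrite H' in H. exact (wo_asym WW H (C3 _)).
    + exact (wo_asym WW H (wo_trans WW (C3 _) H')).
  - rewrite (copy_shift_tail _ L1) (copy_shift_tail _ L2). tauto.
Qed.

(* If [h] maps [Th[th, _)] onto [Th], shifting copy [k] of [u] to copy [h k] is an
   isomorphism from the suffix at copy [th] onto [W]. *)
Lemma copy_suffix_eq : (forall j, exists k, at_least Th th k /\ h k = j) ->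
  word_eq W (suffix W (psi (th, mu))).
Proof.
  intros Hs. pose proof PH as [_ [C2 [_ [C4 _]]]]. apply word_eq_sym.
  apply (word_eq_of_iso copy_shift (well_order_suffix _ _ WW) WW); [exact copy_shift_iff| |].
  - intro z. destruct (classic (ord (wo W) (proj1_sig z) t0)) as [L1|L1].
    + destruct (copy_suffix_head z L1) as [k1 [p1 [E1 G1]]].
      rewrite (copy_shift_head _ _ _ E1 G1) C2. simpl. rewrite <- E1, C2; auto.
    + rewrite (copy_shift_tail _ L1); auto.
  - intro t. destruct (classic (ord (wo W) t t0)) as [L1|L1].
    + destruct (C4 t L1) as [[j p] E]. destruct (Hs j) as [k [G Ek]].
      exists (to_suffix W b (psi (k, p))). rewrite -E -Ek. apply (copy_shift_head _ k p); auto.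
      rewrite to_suffix_val; auto. apply at_least_copy; auto.
    + pose proof (at_least_copy_tail t L1) as Ht.
      exists (to_suffix W b t). rewrite copy_shift_tail; rewrite to_suffix_val; auto.
Qed.

Section ShortShift.
Variable m : car Th.
Hypothesis Hm : forall k, at_least Th th k -> ord Th (h k) m.
Variable g : car Th -> car Th.
Hypothesis Hg : forall j, ord Th j m -> at_least Th th (g j) /\ h (g j) = j.

Lemma shift_inv k : at_least Th th k -> g (h k) = k.
Proof. intros G. destruct (Hg (h k) (Hm k G)) as [G' E]. exact (at_least_iso_inj WT Hh _ _ G' G E). Qed.

Lemma shift_inv_iff j j' : ord Th j m -> ord Th j' m -> (ord Th j j' <-> ord Th (g j) (g j')).
Proof.
  intros Hj Hj'. destruct (Hg j Hj) as [G E]. destruct (Hg j' Hj') as [G' E'].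
  rewrite (Hh _ _ G G') E E'; tauto.
Qed.

Lemma shift_inv_inj j j' : ord Th j m -> ord Th j' m -> g j = g j' -> j = j'.
Proof.
  intros Hj Hj' E. destruct (Hg j Hj) as [_ E1]. destruct (Hg j' Hj') as [_ E2].
  rewrite <- E1, <- E2, E; auto.
Qed.

Variables (p1 : car (wo u)) (q1 : car (wo (suffix W t0))).
Variable f1 : car (wo u) -> car (wo (suffix W t0)).
Hypothesis Ag1 : seg_iso u (suffix W t0) p1 q1 f1.

(* Copies [k < m] of [u] go back to copy [g k] of the suffix at copy [th]; the first
   [p1] letters of copy [m] go to the common prefix of [u] and [W[t0, _)] in [W[t0, _)]. *)
Let V (t : car (wo W)) : car (wo W) :=
  if excluded_middle_informative (ord (wo W) t t0) then
    if excluded_middle_informative (ord Th (pinv t).1 m) then psi (g (pinv t).1, (pinv t).2)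
    else proj1_sig (f1 (pinv t).2)
  else t.

Lemma shift_cases t : ord (wo W) t (psi (m, p1)) ->
  (exists k p, psi (k, p) = t /\ ord Th k m /\ V t = psi (g k, p)) \/
  (exists p, psi (m, p) = t /\ ord (wo u) p p1 /\ V t = proj1_sig (f1 p)).
Proof.
  pose proof PH as [C1 [_ [C3 [C4 _]]]]. intros Ht.
  destruct (C4 t (wo_trans WW Ht (C3 _))) as [[k p] E]. subst t. unfold V.
  destruct (excluded_middle_informative (ord (wo W) (psi (k, p)) t0)) as [Ht0|N]; [|destruct (N (C3 _))].
  rewrite pinv_psi. simpl.
  apply C1 in Ht. destruct Ht as [Hk|[Ek Hp]]; simpl in *.
  - left; exists k, p; split; auto; split; auto.
    destruct (excluded_middle_informative (ord Th k m)); simpl; auto; contradiction.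
  - subst; right; exists p; split; auto; split; auto.
    destruct (excluded_middle_informative (ord Th m m)); simpl; auto. irrefl_contra.
Qed.

Lemma shift_tail p : ~ ord (wo W) (proj1_sig (f1 p)) t0.
Proof.
  intros H. destruct (proj2_sig (f1 p)) as [E'|H']; [rewrite E' in H; irrefl_contra|].
  exact (wo_asym WW H H').
Qed.

Lemma shift_at_least t : ord (wo W) t (psi (m, p1)) -> at_least (wo W) b (V t).
Proof.
  intros Ht. destruct (shift_cases t Ht) as [[k [p [_ [Hk E]]]]|[p [_ [Hp E]]]]; rewrite E.
  - apply at_least_copy. apply (Hg k Hk).
  - apply at_least_copy_tail, shift_tail.
Qed.

Lemma shift_iff s t : ord (wo W) s (psi (m, p1)) -> ord (wo W) t (psi (m, p1)) ->
  (ord (wo W) s t <-> ord (wo W) (V s) (V t)).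
Proof.
  pose proof PH as [C1 [_ [C3 _]]]. pose proof Ag1 as [F1 _]. intros Hs Ht.
  destruct (shift_cases s Hs) as [[k [p [Es [Hk E]]]]|[p [Es [Hp E]]]];
  destruct (shift_cases t Ht) as [[k' [p' [Et [Hk' E']]]]|[p' [Et [Hp' E']]]];
  rewrite E E'; subst s t; rewrite -!C1; simpl; unfold pow_ord; simpl.
  - rewrite (shift_inv_iff k k' Hk Hk'). split; intros [H|[Ee H]].
    + left; auto.
    + right; subst; auto.
    + left; auto.
    + right; split; auto. exact (shift_inv_inj k k' Hk Hk' Ee).
  - split; intros _; [|left; auto].
    destruct (wo_tot WW (proj1_sig (f1 p')) t0) as [H|[H|H]]; [destruct (shift_tail _ H)| |].
    + rewrite H; apply C3.
    + exact (wo_trans WW (C3 _) H).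
  - split; intro H; exfalso.
    + destruct H as [H|[Ee H]]; [exact (wo_asym WT H Hk')|subst; irrefl_contra].
    + apply (shift_tail p). exact (wo_trans WW H (C3 _)).
  - rewrite (F1 p p' Hp Hp'). split; intro H;
      [destruct H as [H|[_ H]]; [irrefl_contra|exact H]|right; split; auto].
Qed.

Lemma shift_lab s : ord (wo W) s (psi (m, p1)) -> lab W (V s) = lab W s.
Proof.
  pose proof PH as [_ [C2 _]]. pose proof Ag1 as [_ [F2 _]]. intros Hs.
  destruct (shift_cases s Hs) as [[k [p [Es [Hk E]]]]|[p [Es [Hp E]]]]; rewrite E; subst s.
  - rewrite !C2; auto.
  - rewrite C2. simpl. rewrite <- (F2 p Hp). auto.
Qed.

Lemma shift_below s : ord (wo W) s (psi (m, p1)) -> ord (wo W) (V s) (proj1_sig q1).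
Proof.
  pose proof PH as [_ [_ [C3 _]]]. pose proof Ag1 as [_ [_ [F3 _]]]. intros Hs.
  destruct (shift_cases s Hs) as [[k [p [Es [Hk E]]]]|[p [Es [Hp E]]]]; rewrite E.
  - destruct (proj2_sig q1) as [E'|H']; [rewrite E'; apply C3|exact (wo_trans WW (C3 _) H')].
  - exact (F3 p Hp).
Qed.

Lemma shift_onto (z : car (wo (suffix W b))) : ord (wo W) (proj1_sig z) (proj1_sig q1) ->
  exists s, ord (wo W) s (psi (m, p1)) /\ V s = proj1_sig z.
Proof.
  pose proof PH as [C1 _]. pose proof Ag1 as [_ [_ [_ F4]]]. intros Hz.
  destruct (classic (ord (wo W) (proj1_sig z) t0)) as [L|L].
  - destruct (copy_suffix_head z L) as [k [p [E G]]].
    assert (Hj : ord (wo W) (psi (h k, p)) (psi (m, p1))) by (apply C1; left; apply Hm; auto).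
    exists (psi (h k, p)); split; auto.
    destruct (shift_cases _ Hj) as [[k' [p' [Es [Hk E']]]]|[p' [Es [Hp E']]]];
      apply power_head_inj in Es; injection Es as Ek Ep; subst p'.
    + rewrite E' Ek shift_inv; auto.
    + pose proof (Hm k G) as HH. rewrite <- Ek in HH. irrefl_contra.
  - assert (Mz : at_least (wo W) t0 (proj1_sig z)).
    { destruct (wo_tot WW (proj1_sig z) t0) as [H|[H|H]]; [contradiction|left|right]; auto. }
    destruct (F4 (to_suffix W t0 (proj1_sig z))) as [p [Hp E]].
    { change (ord (wo W) (proj1_sig (to_suffix W t0 (proj1_sig z))) (proj1_sig q1)).
      rewrite to_suffix_val; auto. }
    assert (Hj : ord (wo W) (psi (m, p)) (psi (m, p1))) by (apply C1; right; simpl; auto).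
    exists (psi (m, p)); split; auto.
    destruct (shift_cases _ Hj) as [[k' [p' [Es [Hk E']]]]|[p' [Es [Hp' E']]]];
      apply power_head_inj in Es.
    + injection Es as Ek Ep. rewrite Ek in Hk. irrefl_contra.
    + injection Es as Ep. subst p'. rewrite E' E to_suffix_val; auto.
Qed.

Lemma shift_seg_iso : seg_iso W (suffix W b) (psi (m, p1)) (to_suffix W b (proj1_sig q1))
  (fun t => to_suffix W b (V t)).
Proof.
  pose proof PH as [_ [_ [C3 _]]].
  assert (QV : proj1_sig (to_suffix W b (proj1_sig q1)) = proj1_sig q1).
  { apply to_suffix_val. right. destruct (proj2_sig q1) as [E|H]; [rewrite E; apply C3|].
    exact (wo_trans WW (C3 _) H). }
  assert (NV : forall t, ord (wo W) t (psi (m, p1)) -> proj1_sig (to_suffix W b (V t)) = V t).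
  { intros; apply to_suffix_val, shift_at_least; auto. }
  split; [|split; [|split]]; simpl.
  - intros s t Hs Ht. rewrite (NV s Hs) (NV t Ht). exact (shift_iff s t Hs Ht).
  - intros s Hs. rewrite (NV s Hs). exact (shift_lab s Hs).
  - intros s Hs. rewrite (NV s Hs) QV. exact (shift_below s Hs).
  - intros z Hz. simpl in Hz. rewrite QV in Hz. destruct (shift_onto z Hz) as [s [Hs E]].
    exists s; split; auto. apply sig_val_inj. rewrite (NV s Hs). exact E.
Qed.

End ShortShift.

(* If [h] maps [Th[th, _)] onto a proper initial segment [Th[0, m)], the suffix at
   copy [th] reads [u^m] followed by [W[t0, _)], while [W] continues [u^m] with [u]. *)
Lemma copy_suffix_str m : (forall k, at_least Th th k -> ord Th (h k) m) ->
  (forall j, ord Th j m -> exists k, at_least Th th k /\ h k = j) ->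
  str_less W (suffix W (psi (th, mu))).
Proof.
  intros Hm1 Hm2. pose proof PH as [_ [C2 [_ [_ [p1 [q1 [f1 [Ag1 L1]]]]]]]].
  destruct (choice (fun j k => ord Th j m -> at_least Th th k /\ h k = j)) as [g Hg].
  { intro j. destruct (classic (ord Th j m)) as [H|H].
    - destruct (Hm2 j H) as [k [G E]]; eauto.
    - exists th; intro; contradiction. }
  exists (psi (m, p1)), (to_suffix W b (proj1_sig q1)).
  eexists; split; [exact (shift_seg_iso m Hm1 g Hg p1 q1 f1 Ag1)|].
  change ((lab W (psi (m, p1)) < lab W (proj1_sig (to_suffix W b (proj1_sig q1))))%O).
  rewrite C2 to_suffix_val; auto. right. destruct (proj2_sig q1) as [E|H]; [rewrite E; apply PH|].
  exact (wo_trans WW (proj1 (proj2 (proj2 PH)) _) H).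
Qed.

End PowerHeadCopy.

Lemma power_head_copy_suffix (W u : word A) Th psi t0 mu :
  well_order (wo W) -> well_order Th -> well_order (wo u) ->
  power_head W u Th psi t0 -> (forall p, ~ ord (wo u) p mu) -> forall th,
  word_eq W (suffix W (psi (th, mu))) \/ str_less W (suffix W (psi (th, mu))).
Proof.
  intros WW WT Wu PH Hmu th.
  destruct (final_segment_prefix_cases Th (lab u mu) th WT) as [h [H1 [_ [Hs|[m [Hm1 Hm2]]]]]].
  - left. exact (copy_suffix_eq W u Th psi t0 mu th WW WT Wu PH Hmu h H1 Hs).
  - right. exact (copy_suffix_str W u Th psi t0 mu th WW WT Wu PH Hmu h H1 m Hm1 Hm2).
Qed.

Lemma power_head_str_suffix (W u : word A) Th psi t0 :
  well_order (wo W) -> well_order Th -> well_order (wo u) ->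
  power_head W u Th psi t0 -> inhabited (car Th) -> str_less W (suffix W t0).
Proof.
  intros WW WT Wu PH [th0]. destruct (wo_has_min WT th0) as [tm Hm].
  assert (P : is_prefix u W).
  { exists (fun q => psi (tm, q)).
    exact (seg_emb_comp (prefix_pow u Th tm Wu WT Hm) (power_head_emb W u Th psi t0 WW PH)
             (fun _ _ => I)). }
  destruct PH as [_ [_ [_ [_ C5]]]].
  exact (str_less_prefix Wu (well_order_suffix _ _ WW) WW (well_order_suffix _ _ WW) C5 P
           (prefix_refl _)).
Qed.

Lemma power_head_prefix (W W2 u : word A) Th psi t0 E :
  well_order (wo W) -> well_order (wo W2) -> well_order (wo u) ->
  power_head W u Th psi t0 -> seg_emb W W2 (fun _ => True) E ->
  power_head W2 u Th (fun x => E (psi x)) (E t0).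
Proof.
  intros WW WW2 Wu [C1 [C2 [C3 [C4 C5]]]] HE. pose proof HE as [E1 [E2 E3]].
  split; [|split; [|split; [|split]]].
  - intros s s'; rewrite C1; apply E1; auto.
  - intros s; rewrite E2; auto.
  - intros s; apply E1; auto.
  - intros t Ht. destruct (E3 t0 t I Ht) as [t' [_ Et]]. subst t.
    apply E1 in Ht; auto. destruct (C4 t' Ht) as [s Es]. exists s; rewrite Es; auto.
  - exact (str_less_prefix Wu (well_order_suffix _ _ WW) Wu (well_order_suffix _ _ WW2) C5
             (prefix_refl _) (seg_emb_suffix W W2 t0 E WW WW2 HE)).
Qed.

Definition power_head_cat_map (u v : word A) (al K : lorder)
  (phi : car K * car (wo u) -> car (wo v))
  (s : car (lorder_cat al K) * car (wo u)) : car (wo (wcat (wpow u al) v)) :=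
  match s.1 with inl i => inl (i, s.2) | inr k => inr (phi (k, s.2)) end.

Lemma power_head_cat (u v : word A) al K phi r0 :
  well_order (wo u) -> well_order (wo v) -> well_order al ->
  power_head v u K phi r0 ->
  power_head (wcat (wpow u al) v) u (lorder_cat al K) (power_head_cat_map u v al K phi) (inr r0).
Proof.
  intros Wu Wv Wa [C1 [C2 [C3 [C4 C5]]]].
  split; [|split; [|split; [|split]]].
  - intros [[i|k] p] [[i'|k'] p']; simpl; unfold pow_ord; simpl.
    + split; intros [H|[E H]]; auto; right; split; auto; [inversion E|subst]; auto.
    + split; auto.
    + split; [intros [H|[E H]]; [auto|discriminate]|tauto].
    + rewrite <- C1. simpl; unfold pow_ord; simpl.
      split; intros [H|[E H]]; auto; right; split; auto; [inversion E|subst]; auto.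
  - intros [[i|k] p]; simpl; auto; apply C2.
  - intros [[i|k] p]; simpl; auto.
  - intros [[i p]|q] Ht; simpl in Ht.
    + exists (inl i, p); unfold power_head_cat_map; auto.
    + destruct (C4 q Ht) as [[k p] E]. exists (inr k, p). unfold power_head_cat_map; simpl.
      rewrite E; auto.
  - assert (WW : well_order (wo (wcat (wpow u al) v))).
    { apply well_order_cat; [apply well_order_pow|]; auto. }
    apply (str_less_prefix Wu (well_order_suffix _ _ Wv) Wu (well_order_suffix _ _ WW) C5
             (prefix_refl _)).
    apply (prefix_suffix_map v (wcat (wpow u al) v) r0 inr Wv WW); simpl; try tauto.
    intros s [[i p]|q] _ Ht H; simpl in *; [destruct Ht as [Ht|Ht]; [discriminate|contradiction]|eauto].
Qed.

(* The empty word is its own square, so it is not primitive. *)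
Lemma prime_word_inhabited (x : word A) : is_word x -> prime_word x -> inhabited (car (wo x)).
Proof.
  intros Wx [Pr _]. apply NNPP; intro N.
  assert (E : word_eq x (wpow x two_order)).
  { exists (fun p => (false, p)), (fun q => q.2).
    split; [|split; [|split]]; try (intros [b p]); intros; exfalso; apply N; constructor; auto. }
  destruct (Pr x two_order Wx is_ord_two_order E) as [H _]. exact (two_order_not_one H).
Qed.

Lemma lex_leq_asym (u v : word A) : well_order (wo u) -> well_order (wo v) ->
  lex_leq u v -> ~ word_eq u v -> lex_leq v u -> False.
Proof.
  intros Wu Wv [H1|H1] N [H2|H2].
  - exact (N (prefix_antisym u v Wu Wv H1 H2)).
  - exact (prefix_str_greater_contra Wu Wv H1 H2).
  - exact (prefix_str_greater_contra Wv Wu H2 H1).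
  - exact (str_less_irrefl Wu (str_less_trans Wu Wv Wu H1 H2)).
Qed.

Lemma prime_suffix_not_le_prefix (u v : word A) r0 :
  well_order (wo u) -> well_order (wo v) -> prime_word v ->
  ~ word_eq u v -> is_prefix u v -> proper_pos v r0 ->
  lex_leq (suffix v r0) u -> False.
Proof.
  intros Wu Wv [_ Pv] N Puv Hr H.
  assert (Ws : well_order (wo (suffix v r0))) by (apply well_order_suffix; auto).
  destruct (Pv r0 Hr) as [H1|H1]; [apply wprefixE in H1|apply (str_ltE _ _ Wv Ws) in H1].
  - destruct H as [H|H].
    + exact (N (prefix_antisym u v Wu Wv Puv (prefix_trans H1 H))).
    + exact (prefix_str_greater_contra Wv Ws H1 (str_less_prefix Ws Wu Ws Wv H (prefix_refl _) Puv)).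
  - destruct H as [H|H].
    + exact (prefix_str_greater_contra Ws Wv (prefix_trans H Puv) H1).
    + apply (str_less_irrefl Wv), (str_less_trans Wv Ws Wv H1).
      exact (str_less_prefix Ws Wu Ws Wv H (prefix_refl _) Puv).
Qed.

Section PowSegIsoSplit.
Variables (u v : word A) (Om : lorder) (m : car Om) (p : car (wo u)) (r : car (wo v)).
Variables (phi : car Om * car (wo u) -> car (wo v)) (mu : car (wo u)).
Hypotheses (Wu : well_order (wo u)) (Wv : well_order (wo v)) (WOm : well_order Om).
Hypothesis Hmu : forall q, ~ ord (wo u) q mu.
Hypothesis Ag : seg_iso (wpow u Om) v (m, p) r phi.

Definition pow_seg_split r0 :=
  (forall k q, ord Om k m -> ord (wo v) (phi (k, q)) r0) /\
  (forall t, ord (wo v) t r0 -> exists k q, ord Om k m /\ phi (k, q) = t) /\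
  seg_iso u (suffix v r0) p (to_suffix v r0 r) (fun q => to_suffix v r0 (phi (m, q))) /\
  proj1_sig (to_suffix v r0 r) = r.

Section InnerSplit.
Hypothesis Hp : ord (wo u) mu p.

Lemma split_inner_mem q : ord (wo u) q p -> at_least (wo v) (phi (m, mu)) (phi (m, q)).
Proof.
  pose proof Ag as [A1 _]. intros Hq.
  destruct (at_least_min Wu q Hmu) as [E|H]; [left; subst; auto|].
  right. apply A1; [right; split; auto|right; split; auto|right; split; auto].
Qed.

Lemma split_inner_seg_iso : seg_iso u (suffix v (phi (m, mu))) p (to_suffix v (phi (m, mu)) r)
  (fun q => to_suffix v (phi (m, mu)) (phi (m, q))).
Proof.
  pose proof Ag as [A1 [A2 [A3 A4]]].
  assert (Hin : forall q, ord (wo u) q p -> ord (wo (wpow u Om)) (m, q) (m, p)).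
  { intros; right; simpl; auto. }
  assert (Mr : at_least (wo v) (phi (m, mu)) r) by (right; apply A3; right; simpl; auto).
  split; [|split; [|split]]; simpl.
  - intros s t Hs Ht.
    rewrite (to_suffix_val _ _ _ (split_inner_mem s Hs)) (to_suffix_val _ _ _ (split_inner_mem t Ht)).
    rewrite <- (A1 _ _ (Hin s Hs) (Hin t Ht)). simpl; unfold pow_ord; simpl.
    split; auto. intros [H|[_ H]]; auto. irrefl_contra.
  - intros s Hs. rewrite (to_suffix_val _ _ _ (split_inner_mem s Hs)) (A2 _ (Hin s Hs)); auto.
  - intros s Hs. rewrite (to_suffix_val _ _ _ (split_inner_mem s Hs)) (to_suffix_val _ _ _ Mr).
    apply A3, Hin, Hs.
  - intros z Hz. rewrite to_suffix_val in Hz; auto.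
    destruct (A4 _ Hz) as [[k q] [[Hk|[Ek Hq]] E]]; simpl in *.
    + exfalso. assert (L : ord (wo v) (phi (k, q)) (phi (m, mu))) by (apply A1; auto; left; auto).
      rewrite E in L. destruct (proj2_sig z) as [E'|H'];
        [rewrite E' in L; exact (wo_irr Wv L)|exact (wo_asym Wv L H')].
    + subst k. exists q; split; auto. apply sig_val_inj.
      rewrite to_suffix_val; [auto|apply split_inner_mem; auto].
Qed.

Lemma pow_seg_split_inner : pow_seg_split (phi (m, mu)).
Proof.
  pose proof Ag as [A1 [A2 [A3 A4]]].
  assert (Mm : ord (wo (wpow u Om)) (m, mu) (m, p)) by (right; split; auto).
  assert (R0 : ord (wo v) (phi (m, mu)) r) by (apply A3; auto).
  split; [|split; [|split]].
  - intros k q Hk. apply A1; auto; left; auto.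
  - intros t Ht. destruct (A4 t (wo_trans Wv Ht R0)) as [[k q] [H E]].
    subst t. apply A1 in Ht; auto.
    destruct Ht as [Hk|[Ek Hq]]; simpl in *; [exists k, q; auto|destruct (Hmu q Hq)].
  - exact split_inner_seg_iso.
  - apply to_suffix_val; right; auto.
Qed.

End InnerSplit.

Lemma pow_seg_iso_split : exists r0, pow_seg_split r0.
Proof.
  destruct (at_least_min Wu p Hmu) as [Ep|Hp]; [|exists (phi (m, mu)); exact (pow_seg_split_inner Hp)].
  assert (Hp : forall s, ~ ord (wo u) s p) by (rewrite Ep; exact Hmu).
  pose proof Ag as [A1 [A2 [A3 A4]]].
  exists r; split; [|split; [|split]].
  - intros k q Hk. apply A3. left; auto.
  - intros t Ht. destruct (A4 t Ht) as [[k q] [H E]]. destruct H as [H|[Ek H]]; simpl in *.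
    + exists k, q; auto.
    + destruct (Hp q H).
  - split; [|split; [|split]];
      try (intros s Hs; destruct (Hp s Hs)); try (intros s t Hs; destruct (Hp s Hs)).
    intros z Hz. exfalso. change (ord (wo v) (proj1_sig z) (proj1_sig (to_suffix v r r))) in Hz.
    rewrite to_suffix_val in Hz; [|left; auto].
    destruct (proj2_sig z) as [E|H]; [rewrite E in Hz; irrefl_contra|exact (wo_asym Wv Hz H)].
  - apply to_suffix_val; left; auto.
Qed.

End PowSegIsoSplit.

Lemma seg_emb_image {x y : word A} {e} : well_order (wo y) -> seg_emb x y (fun _ => True) e ->
  ~ (forall t, exists r, e r = t) ->
  exists t0, (forall r, ord (wo y) (e r) t0) /\ (forall t, ord (wo y) t t0 -> exists r, e r = t).
Proof.
  intros Wy [_ [_ E3]] NS. apply not_all_ex_not in NS.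
  destruct (wo_min Wy _ NS) as [t0 [Nt Mt]]. exists t0; split.
  - intro r. destruct (wo_tot Wy (e r) t0) as [H|[H|H]]; auto.
    + exfalso; apply Nt; eauto.
    + exfalso; apply Nt. destruct (E3 r _ I H) as [r' [_ E]]; eauto.
  - intros t H. apply NNPP; intro N. exact (Mt t N H).
Qed.

Section PrimePowerHead.
Variables (u v : word A) (mu : car (wo u)).
Hypotheses (iu : is_word u) (iv : is_word v) (Pv : prime_word v).
Hypothesis Luv : lex_leq u v.
Hypothesis Nuv : ~ word_eq u v.
Hypothesis Hmu : forall q, ~ ord (wo u) q mu.

Let Wu : well_order (wo u) := is_ord_well_order iu.
Let Wv : well_order (wo v) := is_ord_well_order iv.
Let U := wpow u (wo v).
Let WU : well_order (wo U) := well_order_pow u (wo v) Wu Wv.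

Lemma prime_not_pow K : is_ord K -> ~ word_eq v (wpow u K).
Proof. intros iK E. destruct Pv as [Pr _]. destruct (Pr u K iu iK E) as [_ H]. exact (Nuv H). Qed.

(* A prefix embedding [e] of [u^|v|] into [v] is onto, as [r |-> e (r, mu)] is increasing. *)
Lemma pow_not_prefix : ~ is_prefix U v.
Proof.
  intros [e He]. pose proof He as [E1 [_ E3]].
  assert (Mono : forall r r', ord (wo v) r r' -> ord (wo v) (e (r, mu)) (e (r', mu))).
  { intros r r' H. apply E1; auto. left; auto. }
  pose proof (wo_mono_not_below Wv (fun r => e (r, mu)) Mono) as Se.
  assert (Surj : forall q, exists s, e s = q).
  { intro q. destruct (wo_tot Wv q (e (q, mu))) as [H|[H|H]].
    - destruct (E3 (q, mu) q I H) as [s [_ Es]]; eauto.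
    - eauto.
    - destruct (Se q H). }
  exact (prime_not_pow (wo v) iv (word_eq_sym _ _ (word_eq_of_onto_prefix e WU Wv He Surj))).
Qed.

Section PrefixOfPow.
Variables (e : car (wo v) -> car (wo U)) (m : car (wo v)) (p : car (wo u)).
Hypothesis He : seg_emb v U (fun _ => True) e.
Hypothesis Im1 : forall r, ord (wo U) (e r) (m, p).
Hypothesis Im2 : forall s, ord (wo U) s (m, p) -> exists r, e r = s.

Let einv s := epsilon (prime_word_inhabited v iv Pv) (fun r => e r = s).

Lemma e_einv s : ord (wo U) s (m, p) -> e (einv s) = s.
Proof. intros H. exact (epsilon_spec _ (fun r => e r = s) (Im2 s H)). Qed.

Lemma e_inj r r' : e r = e r' -> r = r'.
Proof. intros E. exact (seg_emb_inj Wv WU He I I E). Qed.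

Lemma prefix_pow_not_at_copy : p <> mu.
Proof.
  intros Ep. pose proof He as [E1 [E2 _]].
  pose (K := sub_order (wo v) (fun k => ord (wo v) k m)).
  assert (Hin : forall (k : car K) q, ord (wo U) (proj1_sig k, q) (m, p)).
  { intros; left; exact (proj2_sig k). }
  apply (prime_not_pow K (is_ord_sub _ _ iv)), word_eq_sym.
  apply (@word_eq_of_iso _ _ (wpow u K) v (fun s : car (wo (wpow u K)) => einv (proj1_sig s.1, s.2))
           (well_order_pow u K Wu (well_order_sub _ _ Wv)) Wv).
  - intros [k q] [k' q']. simpl. rewrite (E1 _ _ I I) (e_einv _ (Hin k q)) (e_einv _ (Hin k' q')).
    apply pow_ord_sub.
  - intros [k q]. simpl. rewrite <- (E2 _ I), (e_einv _ (Hin k q)). auto.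
  - intro r. pose proof (Im1 r) as H. destruct (e r) as [k0 q] eqn:Er.
    destruct H as [H|[Ek H]]; simpl in *; [|rewrite Ep in H; destruct (Hmu q H)].
    exists (exist (fun k => ord (wo v) k m) k0 H, q). simpl. apply e_inj.
    assert (Hx : ord (wo U) (k0, q) (m, p)) by (left; exact H). rewrite Er (e_einv _ Hx); auto.
Qed.

Lemma prefix_pow_first_copy kmin : ord (wo v) kmin m -> (forall k, ~ ord (wo v) k kmin) ->
  is_prefix u v.
Proof.
  intros Hkm Hkmin. pose proof He as [E1 [E2 _]].
  assert (Hb : forall q, ord (wo U) (kmin, q) (m, p)) by (intros; left; auto).
  exists (fun q => einv (kmin, q)); split; [|split].
  - intros q q' _ _. rewrite (E1 _ _ I I) !e_einv; auto. simpl; unfold pow_ord; simpl.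
    split; auto. intros [H|[_ H]]; auto. irrefl_contra.
  - intros q _. rewrite <- (E2 _ I), e_einv; auto.
  - intros q t _ Ht. apply (E1 _ _ I I) in Ht. rewrite e_einv in Ht; auto.
    destruct (e t) as [k' q'] eqn:Et. destruct Ht as [H|[Ek H]]; simpl in *.
    + destruct (Hkmin k' H).
    + subst. exists q'; split; auto. apply e_inj. rewrite Et e_einv; [auto|apply Hb].
Qed.

(* With copies before [m], the suffix of [v] at copy [m] is a proper prefix of [u],
   against the primality of [v]. *)
Lemma prefix_pow_not_inside_later_copy kmin : ord (wo u) mu p -> ord (wo v) kmin m ->
  (forall k, ~ ord (wo v) k kmin) -> False.
Proof.
  intros Hp Hkm Hkmin. pose proof He as [E1 [E2 E3]].
  assert (Hm0 : ord (wo U) (m, mu) (m, p)) by (right; split; auto).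
  pose (r0 := einv (m, mu)). assert (Er0 : e r0 = (m, mu)) by (apply e_einv; auto).
  clearbody r0.
  assert (Pr0 : proper_pos v r0).
  { exists (einv (kmin, mu)). apply (E1 _ _ I I). rewrite Er0 e_einv; left; auto. }
  pose proof (prefix_pow_first_copy kmin Hkm Hkmin) as Puv.
  assert (Fz : forall z : car (wo (suffix v r0)), e (proj1_sig z) = (m, snd (e (proj1_sig z)))).
  { intro z. pose proof (Im1 (proj1_sig z)) as H1.
    assert (H2 : e (proj1_sig z) = (m, mu) \/ ord (wo U) (m, mu) (e (proj1_sig z))).
    { destruct (proj2_sig z) as [E|H]; [left; rewrite E; auto|right; rewrite <- Er0; apply E1; auto]. }
    destruct (e (proj1_sig z)) as [k q]. simpl.
    destruct H2 as [H2|[H2|[Ek H2]]]; simpl in *.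
    - inversion H2; auto.
    - destruct H1 as [H1|[Ek H1]]; simpl in *; [destruct (wo_asym Wv H1 H2)|subst; irrefl_contra].
    - subst; auto. }
  apply (prime_suffix_not_le_prefix u v r0 Wu Wv Pv Nuv Puv Pr0). left.
  exists (fun z => snd (e (proj1_sig z))); split; [|split].
  - intros z z' _ _. change (ord (wo v) (proj1_sig z) (proj1_sig z') <->
      ord (wo u) (snd (e (proj1_sig z))) (snd (e (proj1_sig z')))).
    rewrite (E1 _ _ I I) (Fz z) (Fz z'). simpl; unfold pow_ord; simpl.
    split; auto. intros [H|[_ H]]; auto. irrefl_contra.
  - intros z _. change (lab u (snd (e (proj1_sig z))) = lab v (proj1_sig z)).
    rewrite <- (E2 _ I), (Fz z). auto.
  - intros z q _ Hq. assert (Hmq : ord (wo U) (m, q) (e (proj1_sig z))) by (rewrite (Fz z); right; auto).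
    destruct (E3 _ _ I Hmq) as [r' [_ Er']].
    assert (Mr : at_least (wo v) r0 r').
    { destruct (at_least_min Wu q Hmu) as [E|H]; [left; subst; apply e_inj; rewrite Er' Er0; auto|].
      right. apply (E1 _ _ I I). rewrite Er0 Er'. right; auto. }
    exists (to_suffix v r0 r'); split; auto. rewrite to_suffix_val; auto. rewrite Er'; auto.
Qed.

(* Inside the first copy, [v] is a proper prefix of [u]. *)
Lemma prefix_pow_not_inside_first_copy : (forall k, ~ ord (wo v) k m) -> False.
Proof.
  intros NK. pose proof He as [E1 [E2 E3]].
  apply (lex_leq_asym u v Wu Wv Luv Nuv). left.
  assert (Fr : forall r, e r = (m, snd (e r))).
  { intro r. pose proof (Im1 r) as H1. destruct (e r) as [k q]. simpl.
    destruct H1 as [H1|[Ek H1]]; simpl in *; [destruct (NK k H1)|subst; auto]. }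
  exists (fun r => snd (e r)); split; [|split].
  - intros r r' _ _. rewrite (E1 _ _ I I) (Fr r) (Fr r'). simpl; unfold pow_ord; simpl.
    split; auto. intros [H|[_ H]]; auto. irrefl_contra.
  - intros r _. rewrite <- (E2 _ I), (Fr r). auto.
  - intros r q _ Hq. assert (Hmq : ord (wo U) (m, q) (e r)) by (rewrite (Fr r); right; auto).
    destruct (E3 _ _ I Hmq) as [r' [_ Er']]. exists r'; split; auto. rewrite Er'; auto.
Qed.

End PrefixOfPow.

Lemma prefix_not_pow : ~ is_prefix v U.
Proof.
  intros [e He].
  destruct (classic (forall s, exists r, e r = s)) as [Surj|NS].
  { exact (prime_not_pow (wo v) iv (word_eq_of_onto_prefix e Wv WU He Surj)). }
  destruct (seg_emb_image WU He NS) as [[m p] [Im1 Im2]].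
  destruct (at_least_min Wu p Hmu) as [Ep|Hp].
  { exact (prefix_pow_not_at_copy e m p He Im1 Im2 Ep). }
  destruct (wo_has_min Wv m) as [kmin Hkmin].
  destruct (at_least_min Wv m Hkmin) as [E|Hkm].
  - subst m. exact (prefix_pow_not_inside_first_copy e kmin p He Im1 Hkmin).
  - exact (prefix_pow_not_inside_later_copy e m p He Im1 Im2 kmin Hp Hkm Hkmin).
Qed.

Lemma str_less_pow_power_head : str_less U v ->
  exists (K : lorder) (phi : car K * car (wo u) -> car (wo v)) r0,
    well_order K /\ power_head v u K phi r0.
Proof.
  intros [[m p1] [r [phi [Ag L]]]].
  destruct (pow_seg_iso_split u v (wo v) m p1 r phi mu Wu Wv Wv Hmu Ag) as [r0 [S1 [S2 [Ag3 Vr]]]].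
  pose proof Ag as [A1 [A2 [A3 A4]]].
  pose (K := sub_order (wo v) (fun k => ord (wo v) k m)).
  assert (Hin : forall (k : car K) q, ord (wo U) (proj1_sig k, q) (m, p1)).
  { intros; left; exact (proj2_sig k). }
  exists K, (fun s => phi (proj1_sig s.1, s.2)), r0; split; [apply well_order_sub; auto|].
  split; [|split; [|split; [|split]]].
  - intros [k q] [k' q']. simpl. rewrite <- (A1 _ _ (Hin k q) (Hin k' q')). apply pow_ord_sub.
  - intros [k q]. simpl. rewrite (A2 _ (Hin k q)). auto.
  - intros [k q]. simpl. apply S1. exact (proj2_sig k).
  - intros t Ht. destruct (S2 t Ht) as [k [q [Hk E]]].
    exists (exist (fun k => ord (wo v) k m) k Hk, q); auto.
  - exists p1, (to_suffix v r0 r), (fun q => to_suffix v r0 (phi (m, q))); split; auto.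
    change ((lab u p1 < lab v (proj1_sig (to_suffix v r0 r)))%O). rewrite Vr. exact L.
Qed.

Lemma not_str_less_pow : ~ str_less v U.
Proof.
  intros [r [[m p] [phi [Ag L]]]].
  destruct (seg_iso_sym Wv WU Ag) as [psi Ag2].
  destruct (pow_seg_iso_split u v (wo v) m p r psi mu Wu Wv Wv Hmu Ag2) as [r0 [S1 [S2 [Ag3 Vr]]]].
  assert (Ws : well_order (wo (suffix v r0))) by (apply well_order_suffix; auto).
  destruct (seg_iso_sym Wu Ws Ag3) as [G Ag4].
  assert (Ssu : str_less (suffix v r0) u).
  { exists (to_suffix v r0 r), p, G; split; auto.
    change ((lab v (proj1_sig (to_suffix v r0 r)) < lab u p)%O). rewrite Vr. exact L. }
  destruct (wo_has_min Wv m) as [kmin Hkmin].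
  destruct (at_least_min Wv m Hkmin) as [E|Hkm].
  - subst m. apply (lex_leq_asym u v Wu Wv Luv Nuv). right.
    apply (str_less_prefix Ws Wu Wv Wu Ssu); [|apply prefix_refl].
    exists (fun z => proj1_sig z); split; [|split]; try (intros; simpl; tauto).
    intros z t _ Ht. assert (Mt : at_least (wo v) r0 t).
    { destruct (wo_tot Wv t r0) as [H|[H|H]]; [|left|right]; auto.
      destruct (S2 t H) as [k [q [Hk _]]]. destruct (Hkmin k Hk). }
    exists (to_suffix v r0 t); split; auto. apply to_suffix_val; auto.
  - pose proof Ag2 as [B1 [B2 [B3 B4]]].
    assert (Hb : forall q, ord (wo U) (kmin, q) (m, p)) by (intros; left; auto).
    assert (Puv : is_prefix u v).
    { exists (fun q => psi (kmin, q)); split; [|split].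
      - intros q q' _ _. rewrite <- (B1 _ _ (Hb q) (Hb q')). simpl; unfold pow_ord; simpl.
        split; auto. intros [H|[_ H]]; auto. irrefl_contra.
      - intros q _. rewrite (B2 _ (Hb q)). auto.
      - intros q t _ Ht. destruct (B4 t (wo_trans Wv Ht (B3 _ (Hb q)))) as [[k' q'] [Hx Ex]].
        subst t. apply (B1 _ _ Hx (Hb q)) in Ht. destruct Ht as [H|[Ek H]]; simpl in *.
        + destruct (Hkmin k' H).
        + subst. exists q'; split; auto. }
    apply (prime_suffix_not_le_prefix u v r0 Wu Wv Pv Nuv Puv).
    + exists (psi (kmin, mu)); apply S1; auto.
    + right; exact Ssu.
Qed.

End PrimePowerHead.

(* Compare [v] with [u^|v|], which is longer than [v]: primality of [v] rules out every
   outcome but [u^|v| <_str v], which splits [v] after its longest power of [u]. *)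
Lemma prime_power_head (u v : word A) mu : is_word u -> is_word v -> prime_word v ->
  lex_leq u v -> ~ word_eq u v -> (forall q, ~ ord (wo u) q mu) ->
  exists (K : lorder) (phi : car K * car (wo u) -> car (wo v)) r0,
    well_order K /\ power_head v u K phi r0.
Proof.
  intros iu iv Pv Luv Nuv Hmu.
  pose proof (is_ord_well_order iu) as Wu. pose proof (is_ord_well_order iv) as Wv.
  destruct (word_trichotomy (wpow u (wo v)) v (well_order_pow _ _ Wu Wv) Wv) as [H|[H|[H|H]]].
  - destruct (pow_not_prefix u v mu iu iv Pv Nuv H).
  - destruct (prefix_not_pow u v mu iu iv Pv Luv Nuv Hmu H).
  - exact (str_less_pow_power_head u v mu iu iv Hmu H).
  - destruct (not_str_less_pow u v mu iu iv Pv Luv Nuv Hmu H).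
Qed.

Lemma prefix_cat_l (x y : word A) : is_prefix x (wcat x y).
Proof.
  exists inl; split; [|split]; simpl; try tauto.
  intros p [q|q] _ H; simpl in H; [eauto|contradiction].
Qed.

Lemma suffix_cat_l (x y : word A) s : well_order (wo x) -> well_order (wo y) ->
  is_prefix (suffix x s) (suffix (wcat x y) (inl s)).
Proof.
  intros Wx Wy. apply (prefix_suffix_map x (wcat x y) s inl Wx (well_order_cat x y Wx Wy));
    simpl; try tauto.
  intros t [q|q] _ _ H; simpl in H; [eauto|contradiction].
Qed.

Lemma suffix_cat_r (x y : word A) s : well_order (wo x) -> well_order (wo y) ->
  is_prefix (suffix y s) (suffix (wcat x y) (inr s)).
Proof.
  intros Wx Wy. apply (prefix_suffix_map y (wcat x y) s inr Wy (well_order_cat x y Wx Wy));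
    simpl; try tauto.
  intros t [q|q] _ [Hq|Hq] _; simpl in Hq; [discriminate|contradiction|eauto|eauto].
Qed.

Lemma word_eq_suffix_cat_min (x y : word A) m : well_order (wo x) -> well_order (wo y) ->
  (forall q, ~ ord (wo y) q m) -> word_eq y (suffix (wcat x y) (inr m)).
Proof.
  intros Wx Wy Hm. pose proof (well_order_cat x y Wx Wy) as Wxy.
  assert (Mem : forall q, at_least (wo (wcat x y)) (inr m) (inr q)).
  { intro q. destruct (at_least_min Wy q Hm) as [E|H]; [left; subst|right]; auto. }
  apply (@word_eq_of_iso _ _ y (suffix (wcat x y) (inr m))
    (fun q => to_suffix (wcat x y) (inr m) (inr q)) Wy (well_order_suffix _ _ Wxy)).
  - intros p q. change (ord (wo y) p q <-> ord (wo (wcat x y))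
      (proj1_sig (to_suffix (wcat x y) (inr m) (inr p)))
      (proj1_sig (to_suffix (wcat x y) (inr m) (inr q)))).
    rewrite (to_suffix_val _ _ _ (Mem p)) (to_suffix_val _ _ _ (Mem q)). simpl; tauto.
  - intros q. change (lab (wcat x y) (proj1_sig (to_suffix (wcat x y) (inr m) (inr q))) = lab y q).
    rewrite (to_suffix_val _ _ _ (Mem q)). auto.
  - intros [[p|q] Hz].
    + exfalso. destruct Hz as [Hz|Hz]; [discriminate|exact Hz].
    + exists q. apply sig_val_inj. rewrite (to_suffix_val _ _ _ (Mem q)). auto.
Qed.

Lemma suffix_pow_copy (u : word A) al i p : well_order (wo u) -> well_order al ->
  is_prefix (suffix u p) (suffix (wpow u al) (i, p)).
Proof.
  intros Wu Wa.
  apply (prefix_suffix_map u (wpow u al) p (fun q => (i, q)) Wu (well_order_pow u al Wu Wa)).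
  - intros q q'. simpl; unfold pow_ord; simpl.
    split; [right; auto|intros [H|[_ H]]; [irrefl_contra|auto]].
  - intros q; simpl; auto.
  - intros s [j q] Hs Ht Hlt; unfold at_least, pow_ord in *; simpl in *.
    assert (Ej : j = i).
    { destruct Ht as [Ht|[Ht|[Ht _]]]; [inversion Ht; auto| |auto].
      destruct Hlt as [Hlt|[Hlt _]]; [destruct (wo_asym Wa Ht Hlt)|].
      rewrite Hlt in Ht; destruct (wo_irr Wa Ht). }
    subst j. exists q; auto.
Qed.

Definition cat_pow_first_copy (x y : word A) (be : lorder) (b0 : car be)
  (s : car (wo (wcat x y))) : car (wo (wcat x (wpow y be))) :=
  match s with inl a => inl a | inr q => inr (b0, q) end.

Lemma prefix_cat_pow (x y : word A) be b0 : well_order (wo x) -> well_order (wo y) ->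
  well_order be -> (forall j, ~ ord be j b0) ->
  seg_emb (wcat x y) (wcat x (wpow y be)) (fun _ => True) (cat_pow_first_copy x y be b0).
Proof.
  intros Wx Wy Wb Hb0. split; [|split].
  - intros [p|q] [p'|q'] _ _; simpl; try tauto. unfold pow_ord; simpl.
    split; auto. intros [H|[_ H]]; auto. irrefl_contra.
  - intros [p|q] _; simpl; auto.
  - intros [p|q] [p'|[j q']] _ Ht; simpl in Ht; try contradiction.
    + exists (inl p'); auto.
    + exists (inl p'); auto.
    + destruct Ht as [H|[Ej H]]; simpl in *; [destruct (Hb0 _ H)|subst].
      exists (inr q'); auto.
Qed.

Section ReplaceCopy.
Variables (u z : word A) (al : lorder) (i : car al) (p mu : car (wo u)).
Variable e : car (wo u) -> car (wo (suffix u p)).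
Hypotheses (Wu : well_order (wo u)) (Wz : well_order (wo z)) (Wa : well_order al).
Hypothesis Hmu : forall q, ~ ord (wo u) q mu.
Hypothesis He : seg_emb u (suffix u p) (fun _ => True) e.

Let x := wcat (wpow u al) z.

Let replace_copy (s : car (wo x)) : car (wo x) :=
  match s with
  | inl (j, q) => if excluded_middle_informative (j = i) then inl (i, proj1_sig (e q)) else inl (j, q)
  | inr y => inr y
  end.

Lemma replace_copy_in q : replace_copy (inl (i, q)) = inl (i, proj1_sig (e q)).
Proof. simpl. destruct (excluded_middle_informative (i = i)); [auto|contradiction]. Qed.

Lemma replace_copy_out j q : j <> i -> replace_copy (inl (j, q)) = inl (j, q).
Proof. intros Ej. simpl. destruct (excluded_middle_informative (j = i)); [contradiction|auto]. Qed.

Lemma replace_copy_iff s t : ord (wo x) s t <-> ord (wo x) (replace_copy s) (replace_copy t).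
Proof.
  pose proof He as [He1 _].
  destruct s as [[j q]|y]; destruct t as [[j' q']|y']; simpl; try tauto;
  repeat match goal with |- context [excluded_middle_informative ?P] =>
    destruct (excluded_middle_informative P) end; simpl; unfold pow_ord; simpl; subst; try tauto.
  - rewrite (He1 q q' I I). tauto.
  - split; intros [H|[Ee H]]; [left; exact H|exfalso; congruence|left; exact H|exfalso; congruence].
Qed.

Lemma replace_copy_lab s : lab x (replace_copy s) = lab x s.
Proof.
  pose proof He as [_ [He2 _]].
  destruct s as [[j q]|y]; simpl; auto.
  destruct (excluded_middle_informative (j = i)); simpl; auto. rewrite <- (He2 q I). auto.
Qed.

Lemma suffix_map_first : proj1_sig (e mu) = p.
Proof.
  pose proof He as [He1 [_ He3]].
  destruct (proj2_sig (e mu)) as [H|H]; auto. exfalso.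
  assert (H' : ord (wo (suffix u p)) (to_suffix u p p) (e mu)).
  { change (ord (wo u) (proj1_sig (to_suffix u p p)) (proj1_sig (e mu))).
    rewrite to_suffix_val; [exact H|left; auto]. }
  destruct (He3 mu _ I H') as [q [_ Eq]]. rewrite <- Eq in H'. apply He1 in H'; auto.
  exact (Hmu _ H').
Qed.

(* When [u[p, _)] is a copy of [u], replacing copy [i] of [u] by [u[p, _)] shows that
   the suffix at [(i, mu)] is a prefix of the suffix at [(i, p)]. *)
Lemma suffix_copy_shift : is_prefix (suffix x (inl (i, mu))) (suffix x (inl (i, p))).
Proof.
  assert (Wx : well_order (wo x)) by (apply well_order_cat; [apply well_order_pow|]; auto).
  pose proof (prefix_suffix_onto u p e Wu He) as Surj.
  rewrite <- suffix_map_first, <- replace_copy_in.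
  apply (prefix_suffix_map x x (inl (i, mu)) replace_copy Wx Wx replace_copy_iff replace_copy_lab).
  intros s t' _ Ht' _. rewrite replace_copy_in suffix_map_first in Ht'.
  destruct t' as [[j q]|y]; [|exists (inr y); auto].
  destruct (classic (j = i)) as [Hj|Hj]; [subst j|exists (inl (j, q)); apply replace_copy_out; auto].
  assert (Mq : at_least (wo u) p q).
  { destruct Ht' as [Ht'|[Ht'|[_ Ht']]]; simpl in *;
      [inversion Ht'; left; auto|irrefl_contra|right; auto]. }
  destruct (Surj (to_suffix u p q)) as [q0 Eq0].
  exists (inl (i, q0)). rewrite replace_copy_in Eq0 to_suffix_val; auto.
Qed.

End ReplaceCopy.
Lemma pow_copy_suffix_prefix (y : word A) de d' ym : well_order (wo y) -> well_order de ->
  (forall q, ~ ord (wo y) q ym) -> is_prefix (suffix (wpow y de) (d', ym)) (wpow y de).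
Proof.
  intros Wy Wd Hym.
  destruct (final_segment_prefix de (lab y ym) d' Wd) as [h [H1 H2]].
  assert (Key : forall z : car (wo (suffix (wpow y de) (d', ym))), at_least de d' (proj1_sig z).1).
  { intros [[k p] [E|H]]; simpl; [inversion E; left; auto|].
    destruct H as [H|[E H]]; simpl in *; [right|left]; auto. }
  exists (fun z => (h (proj1_sig z).1, (proj1_sig z).2)); split; [|split].
  - intros z z' _ _. pose proof (Key z) as K1. pose proof (Key z') as K2.
    destruct z as [[k p] Hz]; destruct z' as [[k' p'] Hz']; simpl in *.
    unfold pow_ord; simpl. rewrite (H1 _ _ K1 K2).
    split; intros [H|[E H]]; [left|right; subst|left|right; split]; auto.
    exact (at_least_iso_inj Wd H1 _ _ K1 K2 E).
  - intros z _; simpl; auto.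
  - intros z [j p'] _ Ht. pose proof (Key z) as K1.
    destruct z as [[k p] Hz]; simpl in *.
    assert (Hk : exists k'', at_least de d' k'' /\ h k'' = j).
    { destruct Ht as [H|[E H]]; simpl in *; [apply (H2 k); auto|exists k; auto]. }
    destruct Hk as [k'' [G E]].
    assert (Mt : at_least (wo (wpow y de)) (d', ym) (k'', p')).
    { destruct G as [G|G]; [subst k''|right; left; auto].
      destruct (at_least_min Wy p' Hym) as [Ep|Hp]; [left; subst; auto|right; right; auto]. }
    exists (exist _ (k'', p') Mt); split; auto. simpl. rewrite E; auto.
Qed.

End Powers.

Section PrimitiveCriterion.
Context {d : Order.disp_t} {A : finOrderType d}.
Variables (w y : word A) (de : lorder).
Hypotheses (Ww : well_order (wo w)) (Wy : well_order (wo y)) (Wd : well_order de).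
Variables (f : car (wo w) -> car (wo (wpow y de))) (g : car (wo (wpow y de)) -> car (wo w)).
Hypotheses (F1 : forall p, g (f p) = p) (F2 : forall q, f (g q) = q).
Hypothesis F3 : forall p q, ord (wo w) p q <-> ord (wo (wpow y de)) (f p) (f q).
Hypothesis F4 : forall p, lab (wpow y de) (f p) = lab w p.
Variables (ym : car (wo y)) (d0 : car de).
Hypotheses (Hym : forall q, ~ ord (wo y) q ym) (Hd0 : forall k, ~ ord de k d0).

Lemma pow_iso_inv_iff a b : ord (wo (wpow y de)) a b <-> ord (wo w) (g a) (g b).
Proof. rewrite F3 !F2; tauto. Qed.

Lemma pow_iso_inv_lab a : lab w (g a) = lab (wpow y de) a.
Proof. rewrite <- F4, F2; auto. Qed.

Lemma pow_iso_emb : seg_emb w (wpow y de) (fun _ => True) f.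
Proof.
  split; [|split]; auto. intros p q _ _. exists (g q); auto.
Qed.

Lemma copy_suffix_prefix d' : is_prefix (suffix w (g (d', ym))) w.
Proof.
  pose proof (seg_emb_suffix w (wpow y de) (g (d', ym)) f Ww (well_order_pow y de Wy Wd) pow_iso_emb)
    as P1.
  rewrite F2 in P1.
  apply (prefix_trans P1), (prefix_trans (pow_copy_suffix_prefix y de d' ym Wy Wd Hym)).
  exists g; split; [|split]; auto.
  - intros a b _ _. apply pow_iso_inv_iff.
  - intros a _. apply pow_iso_inv_lab.
  - intros a t _ _. exists (f t); auto.
Qed.

Lemma suffix_last_copy_emb dm : (forall k, at_most de dm k) ->
  seg_emb (suffix w (g (dm, ym))) y (fun _ => True) (fun z => (f (proj1_sig z)).2).
Proof.
  intros Hdm.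
  assert (Fst : forall z : car (wo (suffix w (g (dm, ym)))),
    f (proj1_sig z) = (dm, (f (proj1_sig z)).2)).
  { intro z. assert (Hz : (dm, ym) = f (proj1_sig z) \/ ord (wo (wpow y de)) (dm, ym) (f (proj1_sig z))).
    { destruct (proj2_sig z) as [H|H]; [left; rewrite H F2; auto|right].
      pose proof (proj1 (F3 _ _) H) as H'; rewrite F2 in H'; exact H'. }
    destruct (f (proj1_sig z)) as [k q]. simpl.
    destruct Hz as [Hz|[Hz|[Ek Hz]]]; simpl in *.
    - inversion Hz; auto.
    - destruct (Hdm k) as [Ek|Hk]; [subst; auto|destruct (wo_asym Wd Hz Hk)].
    - subst; auto. }
  split; [|split].
  - intros z z' _ _. change (ord (wo w) (proj1_sig z) (proj1_sig z') <->
      ord (wo y) (f (proj1_sig z)).2 (f (proj1_sig z')).2).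
    rewrite F3 (Fst z) (Fst z'). simpl; unfold pow_ord; simpl.
    split; [intros [H|[_ H]]; [irrefl_contra|auto]|right; auto].
  - intros z _. change (lab y (f (proj1_sig z)).2 = lab w (proj1_sig z)).
    rewrite <- F4, (Fst z). auto.
  - intros z q _ Hq.
    assert (Mt : at_least (wo w) (g (dm, ym)) (g (dm, q))).
    { destruct (at_least_min Wy q Hym) as [E|H]; [left; subst; auto|].
      right; apply pow_iso_inv_iff; right; simpl; auto. }
    exists (to_suffix w (g (dm, ym)) (g (dm, q))); split; auto.
    change ((f (proj1_sig (to_suffix w (g (dm, ym)) (g (dm, q))))).2 = q).
    rewrite (to_suffix_val _ _ _ Mt) F2. auto.
Qed.

(* [w] embeds in the suffix at the last copy [dm] of [y], which embeds in the copy [d0];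
   the composite is a self-embedding of [w], hence onto, which forces [dm = d0]. *)
Lemma last_copy_first dm : (forall k, at_most de dm k) ->
  is_prefix w (suffix w (g (dm, ym))) -> dm = d0.
Proof.
  intros Hdm [e1 He1].
  assert (He3 : seg_emb y w (fun _ => True) (fun q => g (d0, q))).
  { split; [|split].
    - intros q q' _ _. rewrite <- pow_iso_inv_iff. simpl; unfold pow_ord; simpl.
      split; [right; auto|intros [H|[_ H]]; [irrefl_contra|auto]].
    - intros q _. rewrite pow_iso_inv_lab. auto.
    - intros q t _ Ht. rewrite <- (F1 t) in Ht. apply pow_iso_inv_iff in Ht.
      destruct (f t) as [k q'] eqn:Et. destruct Ht as [H|[Ek H]]; simpl in *; [destruct (Hd0 _ H)|subst].
      exists q'; split; auto. rewrite <- Et, F1; auto. }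
  pose proof (seg_emb_comp (seg_emb_comp He1 (suffix_last_copy_emb dm Hdm) (fun _ _ => I)) He3
                (fun _ _ => I)) as EE.
  destruct (self_prefix_onto _ _ Ww EE (g (dm, ym))) as [s Es].
  apply (f_equal f) in Es. rewrite !F2 in Es. inversion Es; auto.
Qed.

End PrimitiveCriterion.

(* In a proper power [y^de], the suffix at each copy of [y] is a prefix of the word, and
   either there is a last copy or copies start arbitrarily far. *)
Lemma primitive_of_suffixes {d} {A : finOrderType d} (w : word A) x0 : well_order (wo w) ->
  (forall g, lex_leq w (suffix w g)) ->
  (forall g, ord (wo w) x0 g -> str_less w (suffix w g)) -> primitive w.
Proof.
  intros Ww Hle Hlt y de iy id Heq.
  pose proof (is_ord_well_order iy) as Wy. pose proof (is_ord_well_order id) as Wd.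
  pose proof Heq as [f [g [F1 [F2 [F3 F4]]]]].
  destruct (wo_has_min Wy (f x0).2) as [ym Hym].
  destruct (wo_has_min Wd (f x0).1) as [d0 Hd0].
  destruct (classic (forall s, s = d0)) as [One|NOne].
  { split; [exists d0; auto|].
    apply (word_eq_trans y (wpow y de) w); [|exact (word_eq_sym _ _ Heq)].
    apply (@word_eq_of_onto_prefix _ _ y (wpow y de) (fun q => (d0, q)) Wy (well_order_pow y de Wy Wd)).
    - apply prefix_pow; auto.
    - intros [dd q]. exists q. rewrite (One dd); auto. }
  exfalso. apply not_all_ex_not in NOne. destruct NOne as [d1 Nd1].
  assert (Hd1 : ord de d0 d1).
  { destruct (at_least_min Wd d1 Hd0) as [E|H]; [contradiction|auto]. }
  pose proof (copy_suffix_prefix w y de Ww Wy Wd f g F1 F2 F3 F4 ym Hym) as PS.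
  assert (WZ : forall t, well_order (wo (suffix w t))) by (intro; apply well_order_suffix; auto).
  destruct (classic (exists dm, forall k, at_most de dm k)) as [[dm Hdm]|NM].
  - destruct (Hle (g (dm, ym))) as [P|S]; [|exact (prefix_str_greater_contra (WZ _) Ww (PS dm) S)].
    pose proof (last_copy_first w y de Ww Wy Wd f g F1 F2 F3 F4 ym d0 Hym Hd0 dm Hdm P) as E.
    destruct (Hdm d1) as [H|H]; subst; [contradiction|exact (wo_asym Wd H Hd1)].
  - assert (Hd' : exists d', ord de (f x0).1 d').
    { apply NNPP; intro N. apply NM. exists (f x0).1. intro k.
      destruct (wo_tot Wd k (f x0).1) as [H|[H|H]]; [right|left|exfalso; apply N]; eauto. }
    destruct Hd' as [d' Hd'].
    assert (Hx : ord (wo w) x0 (g (d', ym))).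
    { rewrite <- (F1 x0). apply (pow_iso_inv_iff w y de f g F2 F3). left; exact Hd'. }
    exact (prefix_str_greater_contra (WZ _) Ww (PS d') (Hlt _ Hx)).
Qed.

Section MainArgument.
Context {d : Order.disp_t} {A : finOrderType d}.
Variables (u v : word A) (al be : lorder).
Hypotheses (iu : is_word u) (iv : is_word v) (Pu : prime_word u) (Pv : prime_word v).
Hypotheses (Luv : lex_lt u v) (ia : is_ord al) (ib : is_ord be).
Hypothesis Lw : lex_lt (wcat (wpow u al) v) v.
Variables (mu : car (wo u)) (mv : car (wo v)) (b0 : car be).
Hypotheses (Hmu : forall q, ~ ord (wo u) q mu) (Hmv : forall q, ~ ord (wo v) q mv).
Hypothesis Hb0 : forall j, ~ ord be j b0.

Let w := wcat (wpow u al) (wpow v be).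
Let w' := wcat (wpow u al) v.
Let Wu : well_order (wo u) := is_ord_well_order iu.
Let Wv : well_order (wo v) := is_ord_well_order iv.
Let Wa : well_order al := is_ord_well_order ia.
Let Wb : well_order be := is_ord_well_order ib.
Let Ww' : well_order (wo w') := well_order_cat _ _ (well_order_pow u al Wu Wa) Wv.
Let Ww : well_order (wo w) :=
  well_order_cat _ _ (well_order_pow u al Wu Wa) (well_order_pow v be Wv Wb).

Lemma alpha_inhabited : inhabited (car al).
Proof.
  apply NNPP; intro Na. destruct Lw as [_ Nw]. apply Nw, word_eq_sym.
  apply (@word_eq_of_iso _ _ v w' inr Wv Ww').
  - intros; simpl; tauto.
  - auto.
  - intros [[i p]|q]; [destruct (Na (inhabits i))|exists q; auto].
Qed.

Lemma v_power_head : exists (K : lorder) (phi : car K * car (wo u) -> car (wo v)) r0,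
  well_order K /\ power_head v u K phi r0.
Proof.
  destruct Luv as [L N]. apply (prime_power_head u v mu iu iv Pv); auto.
  apply lex_leqE; auto.
Qed.

Lemma w'_le_v_suffix : word_eq w' (suffix w' (inr mv)) \/ str_less w' (suffix w' (inr mv)).
Proof.
  destruct v_power_head as [K [phi [r0 [WK CH]]]].
  pose proof (well_order_lorder_cat al K Wa WK) as WT.
  pose proof (power_head_cat u v al K phi r0 Wu Wv Wa CH) as CH'.
  pose proof CH as [C1 [C2 [C3 [C4 C5]]]].
  destruct (classic (inhabited (car K))) as [[k_]|NK].
  - destruct (wo_has_min WK k_) as [kmin Hkmin].
    assert (Emv : phi (kmin, mu) = mv).
    { assert (Mn : forall q, ~ ord (wo v) q (phi (kmin, mu))).
      { intros q Hq. destruct (C4 q (wo_trans Wv Hq (C3 _))) as [[k p] Ek]. subst q.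
        apply C1 in Hq. destruct Hq as [H|[_ H]]; simpl in *; [exact (Hkmin _ H)|exact (Hmu _ H)]. }
      destruct (wo_tot Wv (phi (kmin, mu)) mv) as [H|[H|H]]; auto;
        [destruct (Hmv _ H)|destruct (Mn _ H)]. }
    pose proof (power_head_copy_suffix _ u _ _ _ mu Ww' WT Wu CH' Hmu (inr kmin)) as R.
    unfold power_head_cat_map in R; simpl in R. rewrite Emv in R. exact R.
  - assert (Er : r0 = mv).
    { destruct (wo_tot Wv r0 mv) as [H|[H|H]]; auto; [destruct (Hmv _ H)|].
      destruct (C4 _ H) as [[k p] _]. destruct (NK (inhabits k)). }
    destruct alpha_inhabited as [a].
    right. pose proof (power_head_str_suffix _ u _ _ _ Ww' WT Wu CH' (inhabits (inl a))) as R.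
    rewrite Er in R. exact R.
Qed.

Lemma w'_str_less_v : str_less w' v.
Proof.
  pose proof (word_eq_suffix_cat_min (wpow u al) v mv (well_order_pow u al Wu Wa) Wv Hmv) as Heqv.
  destruct w'_le_v_suffix as [Eq|S].
  - exfalso. destruct Lw as [_ Nw]. exact (Nw (word_eq_trans _ _ _ Eq (word_eq_sym _ _ Heqv))).
  - exact (str_less_prefix Ww' (well_order_suffix _ _ Ww') Ww' Wv S (prefix_refl _)
             (word_eq_prefix _ _ (word_eq_sym _ _ Heqv))).
Qed.

Lemma w'_prefix_w : seg_emb w' w (fun _ => True) (cat_pow_first_copy (wpow u al) v be b0).
Proof. exact (prefix_cat_pow (wpow u al) v be b0 (well_order_pow u al Wu Wa) Wv Wb Hb0). Qed.

Lemma w_str_less_v_suffix j q : str_less w (suffix w (inr (j, q))).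
Proof.
  assert (WZ : well_order (wo (suffix w (inr (j, q))))) by (apply well_order_suffix; auto).
  assert (V1 : lex_leq v (suffix v q)).
  { destruct (at_least_min Wv q Hmv) as [Eq|Hq]; [left; subst; apply prefix_suffix_min; auto|].
    destruct Pv as [_ Pv2]. apply lex_leqE; [auto|apply well_order_suffix; auto|].
    apply Pv2. exists mv; auto. }
  assert (V2 : is_prefix (suffix v q) (suffix w (inr (j, q)))).
  { exact (prefix_trans (suffix_pow_copy v be j q Wv Wb)
             (suffix_cat_r (wpow u al) (wpow v be) (j, q) (well_order_pow u al Wu Wa)
                (well_order_pow v be Wv Wb))). }
  apply (str_less_prefix Ww' WZ Ww WZ); [|exists (cat_pow_first_copy (wpow u al) v be b0);
    exact w'_prefix_w|apply prefix_refl].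
  destruct V1 as [H|H].
  - exact (str_less_prefix Ww' Wv Ww' WZ w'_str_less_v (prefix_refl _) (prefix_trans H V2)).
  - apply (str_less_trans Ww' Wv WZ w'_str_less_v).
    exact (str_less_prefix Wv (well_order_suffix _ _ Wv) Wv WZ H (prefix_refl _) V2).
Qed.

Lemma w_le_copy_suffix i : word_eq w (suffix w (inl (i, mu))) \/ str_less w (suffix w (inl (i, mu))).
Proof.
  destruct v_power_head as [K [phi [r0 [WK CH]]]].
  pose proof (well_order_lorder_cat al K Wa WK) as WT.
  pose proof (power_head_cat u v al K phi r0 Wu Wv Wa CH) as CH'.
  pose proof (power_head_prefix _ _ u _ _ _ _ Ww' Ww Wu CH' w'_prefix_w) as CHw.
  exact (power_head_copy_suffix _ u _ _ _ mu Ww WT Wu CHw Hmu (inl i)).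
Qed.

(* Inside copy [i] of [u]: if [u] is a prefix of [u[p, _)] then [u[p, _)] is a copy of [u]
   and the suffix at [(i, p)] extends the one at [(i, mu)]; otherwise [u <_str u[p, _)]. *)
Lemma w_le_u_suffix i p : lex_leq w (suffix w (inl (i, p))).
Proof.
  assert (WZ : forall t, well_order (wo (suffix w t))) by (intro; apply well_order_suffix; auto).
  destruct (at_least_min Wu p Hmu) as [Ep|Hp].
  { subst p. destruct (w_le_copy_suffix i) as [C|C]; [left; apply word_eq_prefix|right]; auto. }
  destruct Pu as [_ Pu2]. destruct (Pu2 p (ex_intro _ mu Hp)) as [H|H].
  - apply wprefixE in H. destruct H as [e He].
    pose proof (suffix_copy_shift u (wpow v be) al i p mu e Wu (well_order_pow v be Wv Wb) Wa Hmu He)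
      as Pre.
    destruct (w_le_copy_suffix i) as [Eq|S].
    + left. exact (prefix_trans (word_eq_prefix _ _ Eq) Pre).
    + right. exact (str_less_prefix Ww (WZ _) Ww (WZ _) S (prefix_refl _) Pre).
  - apply (str_ltE _ _ Wu (well_order_suffix _ _ Wu)) in H. right.
    destruct alpha_inhabited as [a]. destruct (wo_has_min Wa a) as [a0 Ha0].
    assert (Pu0 : is_prefix u w).
    { apply (prefix_trans (y := wpow u al)); [|apply prefix_cat_l].
      exists (fun q => (a0, q)). apply prefix_pow; auto. }
    assert (Pus : is_prefix (suffix u p) (suffix w (inl (i, p)))).
    { exact (prefix_trans (suffix_pow_copy u al i p Wu Wa)
               (suffix_cat_l (wpow u al) (wpow v be) (i, p) (well_order_pow u al Wu Wa)
                  (well_order_pow v be Wv Wb))). }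
    exact (str_less_prefix Wu (well_order_suffix _ _ Wu) Ww (WZ _) H Pu0 Pus).
Qed.

Lemma w_prime : prime_word w.
Proof.
  assert (Hle : forall t, lex_leq w (suffix w t)).
  { intros [[i p]|[j q]]; [apply w_le_u_suffix|right; apply w_str_less_v_suffix]. }
  split.
  - apply (primitive_of_suffixes w (inr (b0, mv)) Ww Hle).
    intros [[i p]|[j q]] H; [contradiction|apply w_str_less_v_suffix].
  - intros t _. apply lex_leqE; [auto|apply well_order_suffix; auto|apply Hle].
Qed.

End MainArgument.

Theorem mainTheorem11 (d : Order.disp_t) (A : finOrderType d)
  (u v : word A) (alpha : lorder) :
  is_word u -> is_word v -> prime_word u -> prime_word v ->
  lex_lt u v ->
  is_ord alpha ->
  lex_lt (wcat (wpow u alpha) v) v ->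
  forall beta : lorder, is_ord beta -> inhabited (car beta) ->
  prime_word (wcat (wpow u alpha) (wpow v beta)).
Proof.
  intros iu iv Pu Pv Luv ia Lw beta ib [b].
  destruct (prime_word_inhabited u iu Pu) as [u0].
  destruct (wo_has_min (is_ord_well_order iu) u0) as [mu Hmu].
  destruct (prime_word_inhabited v iv Pv) as [v0].
  destruct (wo_has_min (is_ord_well_order iv) v0) as [mv Hmv].
  destruct (wo_has_min (is_ord_well_order ib) b) as [b0 Hb0].
  exact (w_prime u v alpha beta iu iv Pu Pv Luv ia ib Lw mu mv b0 Hmu Hmv Hb0).
Qed.
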